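(* Consider the scheme (EQRF1) $$y_{n+1}=e^{\tau A}y_n+\tau\varphi_1(\tau A)\,h\bigl((t_n+c_1\tau)^r\bigr),\qquad n=0,\dots,N-1,$$ started from the exact initial value $y_0$, with a collocation point $c_1\in[0,1]$, and let $\epsilon_n=y(t_n)-y_n$. Then: \begin{enumerate} \item if $h$ is differentiable on $[0,\infty)$ with bounded derivative, then $\|\epsilon_n\|\le C\tau$; \item if $h$ is twice differentiable on $[0,\infty)$ with bounded derivatives $h',h''$, if $h'(x)\in\mathcal{D}(A)$ for all $x\ge0$ with $x\mapsto Ah'(x)$ bounded, and if $c_1=\tfrac12$, then $\|\epsilon_n\|\le C\tau^{1+r}$. \end{enumerate} In both cases the bound holds for all $N\in\mathbb{N}$ and all $0\le n\le N$, with a constant $C$ that may depend on $T$, $r$, $h$ and the semigroup bound, but not on $n$ or $\tau$.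
   Context: $(X,\|\cdot\|)$ is a Banach space and $A:\mathcal{D}(A)\subset X\to X$ is a linear operator generating a strongly continuous semigroup $\{e^{tA}\}_{t\ge0}$ on $X$. Fix $T>0$, $0<r<1$, $y_0\in X$ and $h:[0,\infty)\to X$. The problem is $y'(t)=Ay(t)+h(t^r)$, $y(0)=y_0$, $t\in[0,T]$, whose (mild) solution is given by the variation-of-constants formula $y(t)=e^{tA}y_0+\int_0^te^{(t-s)A}h(s^r)\,ds$; equivalently $y(t_{n+1})=e^{\tau A}y(t_n)+\int_0^\tau e^{(\tau-s)A}h((t_n+s)^r)\,ds$. Time grid: $N\in\mathbb{N}$, $\tau=T/N$, $t_n=n\tau$. The operator $\varphi_1(\tau A)$ is defined by $\tau\varphi_1(\tau A)v=\int_0^\tau e^{(\tau-s)A}v\,ds$ for $v\in X$. *)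

From Stdlib Require Import Reals Lra.
From Coquelicot Require Import Coquelicot.
Open Scope R_scope.

(* Real power s^r for s >= 0, with the convention 0^r = 0 (r > 0). *)
Definition rpow (s r : R) : R := if Rle_dec s 0 then 0 else Rpower s r.

(* Strongly continuous (C0) semigroup of bounded linear operators on X,
   given by S t for t >= 0 (values for t < 0 are irrelevant). *)
Definition C0_semigroup {X : CompleteNormedModule R_AbsRing} (S : R -> X -> X) : Prop :=
  (forall t, 0 <= t -> forall x y, S t (plus x y) = plus (S t x) (S t y)) /\
  (forall t, 0 <= t -> forall (a : R) x, S t (scal a x) = scal a (S t x)) /\
  (forall t, 0 <= t -> exists M, forall x, norm (S t x) <= M * norm x) /\
  (forall x, S 0 x = x) /\
  (forall s t x, 0 <= s -> 0 <= t -> S (s + t) x = S s (S t x)) /\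
  (forall x, filterlim (fun t => S t x) (at_right 0) (locally x)).

(* x is in D(A) and A x = v, where A is the generator of S. *)
Definition generator {X : CompleteNormedModule R_AbsRing} (S : R -> X -> X) (x v : X) : Prop :=
  filterlim (fun t => scal (/ t) (minus (S t x) x)) (at_right 0) (locally v).

Definition deriv_nonneg {X : CompleteNormedModule R_AbsRing} (f f' : R -> X) : Prop :=
  forall x, 0 <= x -> forall eps, 0 < eps -> exists delta, 0 < delta /\
    forall y, 0 <= y -> Rabs (y - x) < delta ->
      norm (minus (f y) (plus (f x) (scal (y - x) (f' x)))) <= eps * Rabs (y - x).

Definition mild_sol {X : CompleteNormedModule R_AbsRing} (S : R -> X -> X)
  (h : R -> X) (r : R) (y0 : X) (t : R) : X :=
  plus (S t y0) (RInt (fun s => S (t - s) (h (rpow s r))) 0 t).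

(* tau * phi_1(tau A) v = int_0^tau e^{(tau-s)A} v ds *)
Definition tau_phi1 {X : CompleteNormedModule R_AbsRing} (S : R -> X -> X) (tau : R) (v : X) : X :=
  RInt (fun s => S (tau - s) v) 0 tau.

Fixpoint EQRF1 {X : CompleteNormedModule R_AbsRing} (S : R -> X -> X)
  (h : R -> X) (r : R) (y0 : X) (tau c1 : R) (n : nat) : X :=
  match n with
  | O => y0
  | Datatypes.S m =>
      plus (S tau (EQRF1 S h r y0 tau c1 m))
           (tau_phi1 S tau (h (rpow (INR m * tau + c1 * tau) r)))
  end.

(* The error e_n = y(t_n) - y_n obeys the discrete variation-of-constants recursion
   e_{n+1} = e^{tau A} e_n + delta_n, whose local error is
   delta_n = int_0^tau e^{(tau-s)A} (h((t_n+s)^r) - h((t_n+c_1 tau)^r)) ds.  Since the semigroup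
   is uniformly bounded on [0, T] (uniform boundedness principle), |e_n| <= M sum_k |delta_k|.
   For Lipschitz h, |delta_k| <= C tau ((t_k+tau)^r - t_k^r), which telescopes to C tau T^r.
   For c_1 = 1/2 one expands h to first order around the midpoint value m_k: the term linear in
   (t_k+s)^r - m_k is integrated against e^{(tau-s)A} h'(m_k) = h'(m_k) + O(s) (h'(m_k) lies in
   D(A)), its integral is bounded by tau times a second difference of s^r by symmetry, and by
   concavity these second differences sum to at most (tau/2)^r; the remaining terms are
   O(tau^{1+r}) times increments of s^r, which telescope again. *)

From Stdlib Require Import Reals Lra Lia Classical IndefiniteDescription.
From Coquelicot Require Import Coquelicot.
Open Scope R_scope.

(* Coquelicot states some group lemmas with an unfolded canonical structure under [plus]
   ([plus_comm], [opp_plus], [plus_opp_l], ...); rewriting chains then stop matching.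
   The identities below are proved from restatements pinned to the folded structure. *)
Local Notation "x +' y" := (@plus (AbelianGroup.AbelianMonoid _) x y)
  (at level 50, left associativity).

Section GroupIdentities.
Context {G : AbelianGroup}.

Let assoc (x y z : G) : x +' (y +' z) = x +' y +' z := plus_assoc x y z.
Let comm (x y : G) : x +' y = y +' x := plus_comm x y.
Let zero_r (x : G) : x +' zero = x := plus_zero_r x.
Let zero_l (x : G) : zero +' x = x := plus_zero_l x.
Let opp_l (x : G) : opp x +' x = zero := plus_opp_l x.
Let opp_distr (x y : G) : opp (x +' y) = opp x +' opp y := opp_plus x y.
Let minus_def (x y : G) : minus x y = x +' opp y := eq_refl.

Lemma minus_plus_r (x y z : G) : minus x (y +' z) = minus (minus x y) z.
Proof. rewrite !minus_def, opp_distr. apply assoc. Qed.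

Lemma minus_plus_r_split (u v w : G) : minus u v = minus u (v +' w) +' w.
Proof. rewrite minus_plus_r, (minus_def _ w), <- assoc, opp_l. now rewrite zero_r. Qed.

Lemma minus_minus_minus (p q u v : G) :
  minus (minus p u) (minus q v) = minus (minus p q) (minus u v).
Proof.
  rewrite !minus_def, !opp_distr, !opp_opp, <- !assoc. apply f_equal.
  rewrite (comm (opp u)), <- !assoc. apply f_equal. apply comm.
Qed.

Lemma minus_plus_plus (a b c d : G) : minus (a +' b) (c +' d) = minus a c +' minus b d.
Proof.
  rewrite !minus_def, opp_distr, <- !assoc. apply f_equal.
  rewrite comm, <- assoc. apply f_equal. apply comm.
Qed.

Lemma minus_plus_cancel (p q a b c : G) :
  minus (minus p (a +' b)) (minus q a +' minus c b) = minus p (q +' c).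
Proof.
  rewrite <- minus_plus_plus, minus_minus_minus, minus_eq_zero. apply minus_zero_r.
Qed.

Lemma minus_plus_minus (w y : G) : minus (w +' y) (minus w y) = y +' y.
Proof.
  rewrite (minus_def w y), minus_plus_plus, minus_eq_zero, minus_def, opp_opp. apply zero_l.
Qed.

Lemma minus_opp_minus (a b c : G) : minus (opp c) (minus a b) = minus (minus b a) c.
Proof. rewrite !minus_def, opp_distr, opp_opp, comm. now rewrite (comm (opp a)). Qed.

Lemma minus_plus_l (w y : G) : minus (w +' y) w = y.
Proof. rewrite minus_def, comm, assoc, opp_l. apply zero_l. Qed.

Lemma minus_minus_l (w y : G) : minus (minus w y) w = opp y.
Proof. rewrite !minus_def, comm, assoc, opp_l. apply zero_l. Qed.

Lemma plus_minus_chain (p q r : G) : minus p q +' minus q r = minus p r.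
Proof. rewrite !minus_def, <- assoc, (assoc (opp q)), opp_l, zero_l. reflexivity. Qed.

End GroupIdentities.

Lemma scal_minus_distr_r {V : ModuleSpace R_Ring} (a b : R) (v : V) :
  scal (a - b) v = minus (scal a v) (scal b v).
Proof. unfold Rminus, minus. rewrite <- scal_opp_l. exact (scal_distr_r a (opp b) v). Qed.

Lemma scal_minus_distr_l {V : ModuleSpace R_Ring} (k : R) (u v : V) :
  scal k (minus u v) = minus (scal k u) (scal k v).
Proof.
  change (minus (scal k u) (scal k v)) with (plus (scal k u) (opp (scal k v))).
  rewrite <- scal_opp_r. exact (scal_distr_l k u (opp v)).
Qed.

Lemma minus_scal_affine {V : ModuleSpace R_Ring} (p q w : V) (a b : R) :
  minus (minus p (scal b w)) (minus q (scal a w)) = minus (minus p q) (scal (b - a) w).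
Proof. rewrite scal_minus_distr_r. apply minus_minus_minus. Qed.

Lemma minus_scal_affine_correction {V : ModuleSpace R_Ring} (p q u w : V) (x y : R) :
  minus (minus p (scal y w)) (plus (minus q (scal x w)) (scal (y - x) (minus u w))) =
  minus p (plus q (scal (y - x) u)).
Proof.
  rewrite scal_minus_distr_l.
  replace (scal y w) with (plus (scal x w) (scal (y - x) w)); [exact (minus_plus_cancel _ _ _ _ _)|].
  rewrite <- scal_distr_r. apply (f_equal (fun k => scal k w)). change (x + (y - x) = y). ring.
Qed.

Lemma scal_opp_minus {V : ModuleSpace R_Ring} (a b : R) (w : V) :
  scal (b - a) w = opp (scal (a - b) w).
Proof. rewrite <- scal_opp_l. apply (f_equal (fun k => scal k w)). change (b - a = - (a - b)). ring. Qed.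

Lemma minus_plus_scal_div {V : ModuleSpace R_Ring} (a b c : V) (d : R) : d <> 0 ->
  minus a (plus b (scal d c)) = scal d (minus (scal (/ d) (minus a b)) c).
Proof.
  intros Hd. rewrite scal_minus_distr_l, scal_assoc.
  replace (mult d (/ d)) with (@one R_Ring) by (change (1 = d * / d); field; exact Hd).
  rewrite scal_one. exact (minus_plus_r _ _ _).
Qed.

(* Stated over [CompleteNormedModule]: Coquelicot's [NormedModule] lemmas elaborate [plus] and
   [minus] through another canonical path, and [lra] would not identify their atoms with those
   of the goals below. *)
Section NormedModuleFacts.
Context {X : CompleteNormedModule R_AbsRing}.

Lemma norm_scal_R (l : R) (x : X) : norm (scal l x) = Rabs l * norm x.
Proof.
  apply Rle_antisym; [exact (norm_scal l x)|].
  destruct (Req_dec l 0) as [->|Hl].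
  - rewrite Rabs_R0, Rmult_0_l. apply norm_ge_0.
  - assert (Hx : x = scal (/ l) (scal l x)).
    { rewrite scal_assoc. change (mult (/ l) l) with (/ l * l).
      rewrite Rinv_l by exact Hl. symmetry. exact (scal_one x). }
    assert (Hle : norm x <= Rabs (/ l) * norm (scal l x)).
    { rewrite Hx at 1. exact (norm_scal (/ l) (scal l x)). }
    rewrite Rabs_inv in Hle. assert (0 < Rabs l) by (apply Rabs_pos_lt; exact Hl).
    apply (Rmult_le_reg_l (/ Rabs l)); [apply Rinv_0_lt_compat; lra|].
    rewrite <- Rmult_assoc, Rinv_l by lra. lra.
Qed.

Lemma norm_minus_self (x : X) : norm (minus x x) = 0.
Proof. rewrite minus_eq_zero. exact norm_zero. Qed.

Lemma norm_minus_comm (x y : X) : norm (minus x y) = norm (minus y x).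
Proof. now rewrite <- norm_opp, opp_minus. Qed.

Lemma norm_minus_triangle (x y z : X) :
  norm (minus x z) <= norm (minus x y) + norm (minus y z).
Proof. rewrite (minus_trans y). exact (norm_triangle _ _). Qed.

Lemma norm_minus_le (x y : X) : norm (minus x y) <= norm x + norm y.
Proof. rewrite <- (norm_opp y). exact (norm_triangle _ _). Qed.

Lemma norm_minus_ge (x y : X) : norm x - norm y <= norm (minus x y).
Proof. eapply Rle_trans; [apply Rle_abs|exact (norm_triangle_inv _ _)]. Qed.

Lemma norm_minus_split (u v w : X) : norm (minus u v) <= norm (minus u (plus v w)) + norm w.
Proof. rewrite (minus_plus_r_split u v w). exact (norm_triangle _ _). Qed.

Lemma ball_of_norm_lt (x y : X) (e : R) : norm (minus y x) < e -> ball x e y.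
Proof. exact (norm_compat1 x y e). Qed.

Lemma norm_lt_of_ball (x y : X) (e : posreal) :
  ball x e y -> norm (minus y x) < @norm_factor R_AbsRing X * e.
Proof. exact (norm_compat2 x y e). Qed.

End NormedModuleFacts.

Lemma rpow_Rpower x r : 0 < x -> rpow x r = Rpower x r.
Proof. intros Hx. unfold rpow. destruct Rle_dec; [lra|reflexivity]. Qed.

Lemma rpow_0 r : rpow 0 r = 0.
Proof. unfold rpow. destruct Rle_dec; [reflexivity|lra]. Qed.

Lemma rpow_ge0 x r : 0 <= rpow x r.
Proof. unfold rpow. destruct Rle_dec; [lra|left; apply exp_pos]. Qed.

Lemma rpow_le_compat x y r : 0 <= r -> 0 <= x <= y -> rpow x r <= rpow y r.
Proof.
  intros Hr Hxy. destruct (Req_dec x 0) as [->|Hx].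
  - rewrite rpow_0. apply rpow_ge0.
  - rewrite !rpow_Rpower by lra. apply Rle_Rpower_l; lra.
Qed.

Lemma Rpower_le_compat_nonpos a b e : e <= 0 -> 0 < a <= b -> Rpower b e <= Rpower a e.
Proof.
  intros He Hab. replace e with (- (- e)) by ring.
  rewrite (Rpower_Ropp b (- e)), (Rpower_Ropp a (- e)).
  apply Rinv_le_contravar; [apply exp_pos|apply Rle_Rpower_l; lra].
Qed.

(* (x + y)^r = x (x + y)^(r - 1) + y (x + y)^(r - 1), and z^(r - 1) decreases in z. *)
Lemma rpow_subadditive x y r : 0 < r <= 1 -> 0 <= x -> 0 <= y ->
  rpow (x + y) r <= rpow x r + rpow y r.
Proof.
  intros Hr Hx Hy.
  destruct (Req_dec x 0) as [->|Hx0]; [rewrite Rplus_0_l, rpow_0; lra|].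
  destruct (Req_dec y 0) as [->|Hy0]; [rewrite Rplus_0_r, rpow_0; lra|].
  rewrite !rpow_Rpower by lra.
  assert (Hsplit : forall z, 0 < z -> Rpower z r = z * Rpower z (r - 1)).
  { intros z Hz. replace r with (1 + (r - 1)) at 1 by ring.
    now rewrite Rpower_plus, Rpower_1. }
  rewrite !Hsplit by lra.
  assert (Rpower (x + y) (r - 1) <= Rpower x (r - 1)) by (apply Rpower_le_compat_nonpos; lra).
  assert (Rpower (x + y) (r - 1) <= Rpower y (r - 1)) by (apply Rpower_le_compat_nonpos; lra).
  nra.
Qed.

Lemma rpow_sub_le x y r : 0 < r <= 1 -> 0 <= x <= y -> rpow y r - rpow x r <= rpow (y - x) r.
Proof.
  intros Hr Hxy. pose proof (rpow_subadditive x (y - x) r Hr ltac:(lra) ltac:(lra)) as H.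
  replace (x + (y - x)) with y in H by ring. lra.
Qed.

Lemma rpow_dist_le x y r : 0 < r <= 1 -> 0 <= x -> 0 <= y ->
  Rabs (rpow y r - rpow x r) <= rpow (Rabs (y - x)) r.
Proof.
  intros Hr Hx Hy. destruct (Rle_dec x y).
  - pose proof (rpow_le_compat x y r ltac:(lra) ltac:(lra)).
    rewrite !Rabs_right by lra. apply rpow_sub_le; lra.
  - pose proof (rpow_le_compat y x r ltac:(lra) ltac:(lra)).
    rewrite Rabs_left1, (Rabs_left1 (y - x)) by lra.
    replace (- (y - x)) with (x - y) by ring.
    replace (- (rpow y r - rpow x r)) with (rpow x r - rpow y r) by ring.
    apply rpow_sub_le; lra.
Qed.

(* [z |-> (z + d)^r - z^r] has derivative [r ((z + d)^(r-1) - z^(r-1)) <= 0]. *)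
Lemma rpow_increment_antitone x y d r : 0 < r < 1 -> 0 <= x <= y -> 0 <= d ->
  rpow (y + d) r - rpow y r <= rpow (x + d) r - rpow x r.
Proof.
  intros Hr Hxy Hd.
  destruct (Req_dec d 0) as [->|Hd0]; [rewrite !Rplus_0_r; lra|].
  destruct (Req_dec x 0) as [->|Hx0].
  { rewrite Rplus_0_l, rpow_0.
    pose proof (rpow_subadditive y d r ltac:(lra) ltac:(lra) ltac:(lra)). lra. }
  destruct (Req_dec x y) as [->|Hxy0]; [lra|].
  rewrite !rpow_Rpower by lra.
  set (F := fun z => Rpower (z + d) r - Rpower z r).
  set (F' := fun z => r * Rpower (z + d) (r - 1) - r * Rpower z (r - 1)).
  destruct (MVT_cor2 F F' x y) as [c [Hc1 Hc2]]; [lra| |].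
  { intros c Hc. unfold F, F'. apply derivable_pt_lim_minus.
    - replace (r * Rpower (c + d) (r - 1)) with (r * Rpower (c + d) (r - 1) * 1) by ring.
      apply (derivable_pt_lim_comp (fun z => z + d) (fun z => Rpower z r)).
      + replace 1 with (1 + 0) by ring.
        apply derivable_pt_lim_plus; [apply derivable_pt_lim_id|apply derivable_pt_lim_const].
      + apply derivable_pt_lim_power. lra.
    - apply derivable_pt_lim_power. lra. }
  unfold F, F' in Hc1.
  assert (Hdec : Rpower (c + d) (r - 1) <= Rpower c (r - 1))
    by (apply Rpower_le_compat_nonpos; lra).
  assert ((r * Rpower (c + d) (r - 1) - r * Rpower c (r - 1)) * (y - x) <= 0).
  { apply Rmult_le_0_r; [|lra]. apply Rmult_le_compat_l with (r := r) in Hdec; lra. }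
  lra.
Qed.

Lemma Rpower_1_plus x r : 0 < x -> Rpower x (1 + r) = x * rpow x r.
Proof. intros Hx. rewrite rpow_Rpower, Rpower_plus, Rpower_1 by exact Hx. reflexivity. Qed.

Lemma le_rpow_mul_Rpower x T r : 0 < x <= T -> 0 <= r <= 1 -> x <= rpow x r * Rpower T (1 - r).
Proof.
  intros Hx Hr. rewrite rpow_Rpower by lra.
  replace x with (Rpower x (r + (1 - r))) at 1
    by (replace (r + (1 - r)) with 1 by ring; apply Rpower_1; lra).
  rewrite Rpower_plus. apply Rmult_le_compat_l; [left; apply exp_pos|].
  apply Rle_Rpower_l; lra.
Qed.

Lemma rpow_lt_near_0 r : 0 < r -> forall eps, 0 < eps -> exists delta, 0 < delta /\
  forall d, 0 <= d < delta -> rpow d r < eps.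
Proof.
  intros Hr eps He. exists (Rpower eps (/ r)). split; [apply exp_pos|].
  intros d [Hd0 Hd1]. destruct (Req_dec d 0) as [->|Hd]; [now rewrite rpow_0|].
  rewrite rpow_Rpower by lra.
  replace eps with (Rpower (Rpower eps (/ r)) r).
  - apply Rlt_Rpower_l; lra.
  - rewrite Rpower_mult. replace (/ r * r) with 1 by (field; lra). now apply Rpower_1.
Qed.

Section IntervalCalculus.
Context {X : CompleteNormedModule R_AbsRing}.

Definition cont_within (g : R -> X) (a b : R) :=
  forall x, a <= x <= b -> forall eps, 0 < eps -> exists delta, 0 < delta /\
    forall y, a <= y <= b -> Rabs (y - x) < delta -> norm (minus (g y) (g x)) < eps.

Definition rderiv_within (g g' : R -> X) (a b : R) :=
  forall x, a <= x < b -> forall eps, 0 < eps -> exists delta, 0 < delta /\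
    forall y, x < y <= b -> y - x < delta ->
      norm (minus (g y) (plus (g x) (scal (y - x) (g' x)))) <= eps * (y - x).

(* Proved for the slope [K + e] by looking at the supremum [c] of the points up to
   which the estimate holds: continuity carries it to [c], the right derivative past [c]. *)
Lemma mean_value_ineq_slack (g g' : R -> X) a b K e : a < b -> 0 < e ->
  cont_within g a b -> rderiv_within g g' a b ->
  (forall x, a <= x < b -> norm (g' x) <= K) ->
  norm (minus (g b) (g a)) <= (K + e) * (b - a).
Proof.
  intros Hab He Hc Hd HK.
  assert (HKe : 0 <= K + e) by (pose proof (HK a ltac:(lra)); pose proof (norm_ge_0 (g' a)); lra).
  set (Q := fun x => norm (minus (g x) (g a)) <= (K + e) * (x - a)).
  set (E := fun x => a <= x <= b /\ forall y, a <= y <= x -> Q y).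
  assert (Qa : Q a) by (unfold Q; rewrite norm_minus_self; lra).
  assert (Ea : E a) by (split; [lra|intros y Hy; replace y with a by lra; exact Qa]).
  destruct (completeness E) as [c [Hub Hlub]].
  { exists b. intros x [Hx _]. lra. }
  { exists a. exact Ea. }
  assert (Hac : a <= c) by (apply Hub; exact Ea).
  assert (Hcb : c <= b) by (apply Hlub; intros x [Hx _]; lra).
  assert (Hbelow : forall y, a <= y < c -> Q y).
  { intros y Hy. apply NNPP. intros HQ.
    assert (c <= y); [|lra].
    apply Hlub. intros x [Hx Hx2]. apply Rnot_lt_le. intros Hxy. apply HQ, Hx2. lra. }
  assert (Qc : Q c).
  { destruct (Req_dec c a) as [->|Hca]; [exact Qa|].
    unfold Q. apply Rle_plus_epsilon. intros eta Heta.
    destruct (Hc c ltac:(lra) eta Heta) as [dl [Hdl Hdd]].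
    set (y := Rmax a (c - dl / 2)).
    assert (Hy : a <= y < c) by (unfold y; split; [apply Rmax_l|apply Rmax_lub_lt; lra]).
    assert (Hyc : Rabs (y - c) < dl).
    { rewrite Rabs_left1 by lra. unfold y. apply Rmax_case_strong; intros; lra. }
    specialize (Hdd y ltac:(lra) Hyc). rewrite norm_minus_comm in Hdd.
    specialize (Hbelow y Hy). unfold Q in Hbelow.
    assert ((K + e) * (y - a) <= (K + e) * (c - a)) by (apply Rmult_le_compat_l; lra).
    pose proof (norm_minus_triangle (g c) (g y) (g a)). lra. }
  assert (Hcb' : c = b); [|subst c; exact Qc].
  apply NNPP. intros Hne.
  destruct (Hd c ltac:(lra) e He) as [dl [Hdl Hdd]].
  set (y0 := Rmin b (c + dl / 2)).
  assert (Hy0 : c < y0 <= b) by (unfold y0; split; [apply Rmin_glb_lt; lra|apply Rmin_l]).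
  assert (y0 <= c); [|lra].
  apply Hub. split; [lra|]. intros y Hy.
  destruct (Rle_lt_dec y c) as [Hyc|Hyc].
  - destruct (Req_dec y c) as [->|]; [exact Qc|apply Hbelow; lra].
  - assert (Hy' : y - c < dl) by (pose proof (Rmin_r b (c + dl / 2)); unfold y0 in Hy; lra).
    specialize (Hdd y ltac:(lra) Hy').
    pose proof (norm_minus_split (g y) (g c) (scal (y - c) (g' c))) as Hs.
    rewrite norm_scal_R, Rabs_right in Hs by lra.
    pose proof (HK c ltac:(lra)).
    assert ((y - c) * norm (g' c) <= (y - c) * K) by (apply Rmult_le_compat_l; lra).
    pose proof (norm_minus_triangle (g y) (g c) (g a)).
    unfold Q in *. nra.
Qed.

Lemma mean_value_ineq (g g' : R -> X) a b K : a <= b ->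
  cont_within g a b -> rderiv_within g g' a b ->
  (forall x, a <= x < b -> norm (g' x) <= K) ->
  norm (minus (g b) (g a)) <= K * (b - a).
Proof.
  intros Hab Hc Hd HK.
  destruct (Req_dec a b) as [<-|Hne]; [rewrite norm_minus_self; lra|].
  apply Rle_plus_epsilon. intros e He.
  replace (K * (b - a) + e) with ((K + e / (b - a)) * (b - a)) by (field; lra).
  apply (mean_value_ineq_slack g g'); auto; [lra|apply Rdiv_lt_0_compat; lra].
Qed.

Lemma mean_value_ineq_affine (g g' : R -> X) (w : X) a b K : a <= b ->
  cont_within g a b -> rderiv_within g g' a b ->
  (forall x, a <= x < b -> norm (minus (g' x) w) <= K) ->
  norm (minus (minus (g b) (g a)) (scal (b - a) w)) <= K * (b - a).
Proof.
  intros Hab Hc Hd HK.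
  set (f := fun z => minus (g z) (scal z w)).
  assert (Hf : forall y x, minus (f y) (f x) = minus (minus (g y) (g x)) (scal (y - x) w))
    by (intros; exact (minus_scal_affine _ _ _ _ _)).
  rewrite <- Hf. apply (mean_value_ineq f (fun z => minus (g' z) w)); auto.
  - intros x Hx eps He.
    destruct (Hc x Hx (eps / 2) ltac:(lra)) as [d [Hd0 Hdd]].
    set (c := norm w + 1).
    assert (Hc0 : 0 < c) by (unfold c; pose proof (norm_ge_0 w); lra).
    exists (Rmin d (eps / (2 * c))). split; [apply Rmin_glb_lt; [lra|apply Rdiv_lt_0_compat; lra]|].
    intros y Hy Hyx.
    assert (H1 : Rabs (y - x) < d) by (eapply Rlt_le_trans; [exact Hyx|apply Rmin_l]).
    assert (H2 : Rabs (y - x) * c <= eps / 2).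
    { apply Rle_trans with (eps / (2 * c) * c); [|right; field; lra].
      apply Rmult_le_compat_r; [lra|]. left. eapply Rlt_le_trans; [exact Hyx|apply Rmin_r]. }
    rewrite Hf. eapply Rle_lt_trans; [apply norm_minus_le|].
    rewrite norm_scal_R. specialize (Hdd y Hy H1).
    pose proof (Rabs_pos (y - x)). unfold c in H2. nra.
  - intros x Hx eps He.
    destruct (Hd x Hx eps He) as [d [Hd0 Hdd]].
    exists d. split; [exact Hd0|]. intros y Hy Hyd.
    apply Rle_trans with (norm (minus (g y) (plus (g x) (scal (y - x) (g' x))))); [|now apply Hdd].
    right. f_equal. exact (minus_scal_affine_correction _ _ _ _ _ _).
Qed.

End IntervalCalculus.

Section DerivNonneg.
Context {X : CompleteNormedModule R_AbsRing}.
Variables (h h' : R -> X).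
Hypothesis Hd : deriv_nonneg h h'.

Lemma deriv_nonneg_cont_within a b : 0 <= a -> cont_within h a b.
Proof.
  intros Ha x Hx eps He.
  destruct (Hd x ltac:(lra) 1 ltac:(lra)) as [d [Hd0 Hdd]].
  set (c := norm (h' x) + 1).
  assert (Hc : 0 < c) by (unfold c; pose proof (norm_ge_0 (h' x)); lra).
  exists (Rmin d (eps / (2 * c))). split; [apply Rmin_glb_lt; [lra|apply Rdiv_lt_0_compat; lra]|].
  intros y Hy Hyx.
  assert (Hyd : Rabs (y - x) < d) by (eapply Rlt_le_trans; [exact Hyx|apply Rmin_l]).
  assert (Hye : Rabs (y - x) * c <= eps / 2).
  { apply Rle_trans with (eps / (2 * c) * c); [|right; field; lra].
    apply Rmult_le_compat_r; [lra|]. left. eapply Rlt_le_trans; [exact Hyx|apply Rmin_r]. }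
  specialize (Hdd y ltac:(lra) Hyd).
  pose proof (norm_minus_split (h y) (h x) (scal (y - x) (h' x))) as Hs.
  rewrite norm_scal_R in Hs. unfold c in Hye. pose proof (Rabs_pos (y - x)). nra.
Qed.

Lemma deriv_nonneg_rderiv_within a b : 0 <= a -> rderiv_within h h' a b.
Proof.
  intros Ha x Hx eps He.
  destruct (Hd x ltac:(lra) eps He) as [d [Hd0 Hdd]].
  exists d. split; [exact Hd0|]. intros y Hy Hyd.
  specialize (Hdd y ltac:(lra) ltac:(rewrite Rabs_right; lra)).
  rewrite Rabs_right in Hdd by lra. exact Hdd.
Qed.

Lemma deriv_nonneg_lipschitz M : (forall x, 0 <= x -> norm (h' x) <= M) ->
  forall x y, 0 <= x -> 0 <= y -> norm (minus (h y) (h x)) <= M * Rabs (y - x).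
Proof.
  intros HM.
  assert (Hle : forall x y, 0 <= x <= y -> norm (minus (h y) (h x)) <= M * (y - x)).
  { intros x y Hxy. apply (mean_value_ineq h h'); [lra|apply deriv_nonneg_cont_within;
      lra|apply deriv_nonneg_rderiv_within; lra|intros z Hz; apply HM; lra]. }
  intros x y Hx Hy. destruct (Rle_dec x y).
  - rewrite Rabs_right by lra. apply Hle. lra.
  - rewrite Rabs_left1, norm_minus_comm by lra. replace (- (y - x)) with (x - y) by ring.
    apply Hle. lra.
Qed.

End DerivNonneg.

Section Taylor.
Context {X : CompleteNormedModule R_AbsRing}.

Lemma deriv_nonneg_taylor (h h' h'' : R -> X) M2 :
  deriv_nonneg h h' -> deriv_nonneg h' h'' -> (forall x, 0 <= x -> norm (h'' x) <= M2) ->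
  forall x y, 0 <= x -> 0 <= y ->
    norm (minus (minus (h y) (h x)) (scal (y - x) (h' x))) <= M2 * (y - x) ^ 2.
Proof.
  intros Hd1 Hd2 HM2 x y Hx Hy.
  assert (Hlip := deriv_nonneg_lipschitz h' h'' Hd2 M2 HM2 x).
  assert (Hmvt : forall a b, 0 <= a <= b -> x = a \/ x = b ->
    norm (minus (minus (h b) (h a)) (scal (b - a) (h' x))) <= M2 * (b - a) ^ 2).
  { intros a b Hab Hxab.
    replace (M2 * (b - a) ^ 2) with (M2 * (b - a) * (b - a)) by ring.
    apply (mean_value_ineq_affine h h'); [lra|apply (deriv_nonneg_cont_within h h' Hd1); lra
      |apply (deriv_nonneg_rderiv_within h h' Hd1); lra|].
    intros z Hz. eapply Rle_trans; [apply Hlip; lra|].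
    assert (0 <= M2) by (pose proof (HM2 x Hx); pose proof (norm_ge_0 (h'' x)); lra).
    apply Rmult_le_compat_l; [lra|]. apply Rabs_le. lra. }
  destruct (Rle_dec x y).
  - apply Hmvt; lra.
  - rewrite (scal_opp_minus x y), <- norm_opp, opp_minus.
    replace ((y - x) ^ 2) with ((x - y) ^ 2) by ring.
    rewrite (minus_opp_minus (h y) (h x)). apply Hmvt; lra.
Qed.

End Taylor.

Section Integrals.
Context {V : CompleteNormedModule R_AbsRing}.

(* Continuity on [a, b] suffices: integrate the extension that is constant outside. *)
Lemma ex_RInt_cont_within (f : R -> V) a b : a <= b -> cont_within f a b -> ex_RInt f a b.
Proof.
  intros Hab Hc.
  set (clamp := fun s => Rmax a (Rmin b s)).
  assert (Hin : forall s, a <= clamp s <= b)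
    by (intros s; unfold clamp, Rmax, Rmin; repeat destruct Rle_dec; lra).
  assert (Hlip : forall x y, Rabs (clamp y - clamp x) <= Rabs (y - x)).
  { intros x y. unfold clamp, Rmax, Rmin.
    repeat destruct Rle_dec; unfold Rabs; repeat destruct Rcase_abs; lra. }
  apply ex_RInt_ext with (f := fun s => f (clamp s)).
  { intros x Hx. rewrite Rmin_left, Rmax_right in Hx by lra. f_equal.
    unfold clamp, Rmax, Rmin. repeat destruct Rle_dec; lra. }
  apply ex_RInt_continuous. intros z _.
  apply (proj2 (filterlim_locally _ _)). intros eps.
  destruct (Hc (clamp z) (Hin z) eps (cond_pos eps)) as [d [Hd Hdd]].
  exists (mkposreal d Hd). intros y Hy.
  apply ball_of_norm_lt, Hdd; [apply Hin|].
  eapply Rle_lt_trans; [apply Hlip|exact Hy].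
Qed.

End Integrals.

Lemma is_RInt_shift {V : NormedModule R_AbsRing} (f : R -> V) a b c l :
  is_RInt f a b l -> is_RInt (fun s => f (s - c)) (a + c) (b + c) l.
Proof.
  intros H. apply (is_RInt_ext (fun y => scal 1 (f (1 * y + - c)))).
  { intros x _. replace (1 * x + - c) with (x - c) by ring. exact (scal_one _). }
  apply is_RInt_comp_lin.
  replace (1 * (a + c) + - c) with a by ring. now replace (1 * (b + c) + - c) with b by ring.
Qed.

Lemma is_RInt_linear {U V : NormedModule R_AbsRing} (L : U -> V) (f : R -> U) a b I :
  is_linear L -> is_RInt f a b I -> is_RInt (fun s => L (f s)) a b (L I).
Proof.
  intros HL H. unfold is_RInt in *.
  eapply filterlim_ext; [|eapply filterlim_comp; [exact H|apply linear_cont; exact HL]].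
  intros ptd. simpl.
  assert (Hsum : forall ptd, Riemann_sum (fun s => L (f s)) ptd = L (Riemann_sum f ptd)).
  { apply SF_cons_ind.
    - intros x0. unfold Riemann_sum. simpl. symmetry. exact (linear_zero L HL).
    - intros h s IH. rewrite !Riemann_sum_cons, IH, (linear_plus L HL), (linear_scal L HL).
      reflexivity. }
  rewrite Hsum, (linear_scal L HL). reflexivity.
Qed.

Section UniformBoundedness.
Context {X : CompleteNormedModule R_AbsRing}.

Definition unit_image (L : X -> X) (v : R) := exists x, norm x <= 1 /\ v = norm (L x).

Lemma unit_image_lub_exists (L : X -> X) : is_linear L -> exists nu, is_lub (unit_image L) nu.
Proof.
  intros HL. destruct (linear_norm L HL) as [M [HM0 HM]].
  destruct (completeness (unit_image L)) as [nu Hnu]; [|exists (norm (L zero)), zero;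
    split; [rewrite norm_zero; lra|reflexivity]|now exists nu].
  exists M. intros v [x [Hx ->]]. eapply Rle_trans; [apply HM|]. nra.
Qed.

Lemma unit_image_lub_bound (L : X -> X) nu : is_linear L -> is_lub (unit_image L) nu ->
  forall w, norm (L w) <= nu * norm w.
Proof.
  intros HL [Hub _] w.
  destruct (Req_dec (norm w) 0) as [H0|H0].
  - apply norm_eq_zero in H0. subst w. rewrite (linear_zero L HL), norm_zero, Rmult_0_r. lra.
  - assert (Hw : 0 < norm w) by (pose proof (norm_ge_0 w); lra).
    set (u := scal (/ norm w) w).
    assert (Hu : norm u = 1).
    { unfold u. rewrite norm_scal_R, Rabs_right by (left; apply Rinv_0_lt_compat; lra).
      field. lra. }
    assert (HLu : norm (L u) = / norm w * norm (L w)).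
    { unfold u. rewrite (linear_scal L HL).
      rewrite <- (Rabs_right (/ norm w)) at 2 by (left; apply Rinv_0_lt_compat; lra).
      exact (norm_scal_R _ _). }
    assert (Hle := Hub (norm (L u)) ltac:(exists u; split; [lra|reflexivity])).
    rewrite HLu in Hle.
    apply (Rmult_le_reg_l (/ norm w)); [apply Rinv_0_lt_compat; lra|].
    replace (/ norm w * (nu * norm w)) with nu by (field; lra). exact Hle.
Qed.

Lemma unit_image_lub_approx (L : X -> X) nu : is_lub (unit_image L) nu -> 0 < nu ->
  exists z, norm z <= 1 /\ 2 / 3 * nu < norm (L z).
Proof.
  intros [_ Hlub] Hnu. apply NNPP. intros Hn.
  assert (nu <= 2 / 3 * nu); [|lra].
  apply Hlub. intros v [x [Hx ->]]. apply Rnot_lt_le. intros Hlt. apply Hn. now exists x.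
Qed.

(* Sokal's lemma, the key step of his elementary proof of the uniform boundedness principle. *)
Lemma linear_plus_or_minus (L : X -> X) : is_linear L ->
  forall w y, exists w', norm (minus w' w) <= norm y /\ norm (L y) <= norm (L w').
Proof.
  intros HL w y.
  destruct (Rle_dec (norm (L y)) (norm (L (plus w y)))) as [Hp|Hp].
  - exists (plus w y). split; [|exact Hp]. right. f_equal. exact (minus_plus_l w y).
  - exists (minus w y). split.
    + right. rewrite <- (norm_opp y). f_equal. exact (minus_minus_l w y).
    + assert (H2 : minus (L (plus w y)) (L (minus w y)) = scal 2 (L y)).
      { transitivity (L (minus (plus w y) (minus w y))); [symmetry; exact (linear_minus L _ _ HL)|].
        transitivity (L (plus y y)); [f_equal; exact (minus_plus_minus w y)|].
        transitivity (plus (L y) (L y)); [exact (linear_plus L HL y y)|].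
        replace 2 with (1 + 1) by ring.
        transitivity (plus (scal 1 (L y)) (scal 1 (L y))); [f_equal; symmetry; exact (scal_one _)|].
        symmetry. exact (scal_distr_r 1 1 (L y)). }
      pose proof (norm_minus_le (L (plus w y)) (L (minus w y))) as Hle.
      rewrite H2, norm_scal_R, Rabs_right in Hle by lra. lra.
Qed.

Lemma cauchy_geometric_limit (u : nat -> X) q : 0 <= q < 1 ->
  (forall n, norm (minus (u (S n)) (u n)) <= q ^ S n) ->
  exists l, forall n, norm (minus l (u n)) <= q ^ S n / (1 - q).
Proof.
  intros Hq Hu.
  assert (Hpart : forall n j, norm (minus (u (n + j)%nat) (u n)) <= (q ^ S n - q ^ S (n + j)) / (1 - q)).
  { intros n j. induction j as [|j IH].
    - rewrite Nat.add_0_r, norm_minus_self, Rminus_diag. unfold Rdiv. lra.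
    - replace (n + S j)%nat with (S (n + j)) by lia.
      eapply Rle_trans; [apply (norm_minus_triangle _ (u (n + j)%nat))|].
      specialize (Hu (n + j)%nat).
      apply Rle_trans with ((q ^ S n - q ^ S (n + j)) / (1 - q) + q ^ S (n + j)); [lra|].
      right. simpl. field. lra. }
  assert (Hpow : forall n, 0 <= q ^ n) by (intros; apply pow_le; lra).
  assert (Hcauchy : forall n j, norm (minus (u (n + j)%nat) (u n)) <= q ^ S n / (1 - q)).
  { intros n j. eapply Rle_trans; [apply Hpart|]. unfold Rdiv.
    apply Rmult_le_compat_r; [apply Rlt_le, Rinv_0_lt_compat; lra|]. pose proof (Hpow (S (n + j))). lra. }
  assert (Hlim : exists l : X, filterlim u eventually (locally l)).
  { apply (proj1 (filterlim_locally_cauchy (F := eventually) u)). intros eps.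
    destruct (pow_lt_1_zero q ltac:(rewrite Rabs_right; lra) (eps * (1 - q) / 2)
      ltac:(apply Rdiv_lt_0_compat; [apply Rmult_lt_0_compat; [apply cond_pos|]|]; lra)) as [N HN].
    exists (fun m => (N <= m)%nat). split; [now exists N|].
    intros m m' Hm Hm'. apply ball_of_norm_lt.
    eapply Rle_lt_trans; [apply (norm_minus_triangle _ (u N))|].
    replace m' with (N + (m' - N))%nat by lia. replace m with (N + (m - N))%nat by lia.
    rewrite (norm_minus_comm (u N)).
    pose proof (Hcauchy N (m' - N)%nat). pose proof (Hcauchy N (m - N)%nat).
    specialize (HN (S N) ltac:(lia)). rewrite Rabs_right in HN by (apply Rle_ge, Hpow).
    assert (q ^ S N / (1 - q) < eps / 2); [|lra].
    apply (Rmult_lt_reg_r (1 - q)); [lra|]. unfold Rdiv. rewrite Rmult_assoc, Rinv_l by lra.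
    lra. }
  destruct Hlim as [l Hl]. exists l. intros n.
  apply Rle_plus_epsilon. intros e He.
  assert (Hnf := @norm_factor_gt_0 R_AbsRing X).
  destruct (proj1 (filterlim_locally _ _) Hl (mkposreal (e / norm_factor) (Rdiv_lt_0_compat _ _ He Hnf)))
    as [N HN].
  specialize (HN (n + N)%nat ltac:(lia)). apply norm_lt_of_ball in HN. simpl in HN.
  replace (norm_factor * (e / norm_factor)) with e in HN by (field; lra).
  eapply Rle_trans; [apply (norm_minus_triangle _ (u (n + N)%nat))|].
  rewrite norm_minus_comm in HN. pose proof (Hcauchy n N). lra.
Qed.

(* Gliding hump: the perturbations of size [3^-n] are chosen by Sokal's lemma, and the
   weight [6 3^n (n + 1)] beats both the tail of the series and the factor [3^-n]. *)
Lemma gliding_hump (L : nat -> X -> X) (nu : nat -> R) :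
  (forall n, is_linear (L n)) -> (forall n, is_lub (unit_image (L n)) (nu n)) ->
  (forall n, 6 * 3 ^ n * (INR n + 1) < nu n) ->
  exists x, forall n, INR n + 1 <= norm (L n x).
Proof.
  intros HL Hnu Hbig.
  assert (Hp : forall n, 0 < (/ 3) ^ n) by (intros; apply pow_lt; lra).
  assert (Hnu0 : forall n, 0 < nu n).
  { intros n. specialize (Hbig n). pose proof (pow_lt 3 n ltac:(lra)). pose proof (pos_INR n). nra. }
  destruct (functional_choice _ (fun n => unit_image_lub_approx (L n) (nu n) (Hnu n) (Hnu0 n)))
    as [z Hz].
  set (y := fun n => scal ((/ 3) ^ n) (z n)).
  assert (Hy : forall n, norm (y n) <= (/ 3) ^ n
                         /\ 2 / 3 * (/ 3) ^ n * nu n < norm (L n (y n))).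
  { intros n. destruct (Hz n) as [Hz1 Hz2]. specialize (Hp n).
    assert (HLy : norm (L n (y n)) = (/ 3) ^ n * norm (L n (z n))).
    { unfold y. rewrite (linear_scal (L n) (HL n)).
      rewrite <- (Rabs_right ((/ 3) ^ n)) at 2 by lra. exact (norm_scal_R _ _). }
    assert (Hyn : norm (y n) = (/ 3) ^ n * norm (z n)).
    { rewrite <- (Rabs_right ((/ 3) ^ n)) by lra. exact (norm_scal_R _ _). }
    rewrite HLy, Hyn. split; nra. }
  destruct (functional_choice (fun (p : nat * X) w' =>
      norm (minus w' (snd p)) <= norm (y (fst p)) /\ norm (L (fst p) (y (fst p))) <= norm (L (fst p) w')))
    as [step Hstep].
  { intros [n w]. exact (linear_plus_or_minus (L n) (HL n) w (y n)). }
  set (u := fix u (n : nat) : X := match n with O => step (O, zero) | S m => step (S m, u m) end).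
  assert (Hu : forall n, norm (L n (y n)) <= norm (L n (u n))).
  { intros [|n]; [exact (proj2 (Hstep (O, zero)))|exact (proj2 (Hstep (S n, u n)))]. }
  destruct (cauchy_geometric_limit u (/ 3) ltac:(lra)) as [l Hl].
  { intros n. eapply Rle_trans; [exact (proj1 (Hstep (S n, u n)))|apply Hy]. }
  exists l. intros n.
  assert (Hdist : norm (minus (u n) l) <= (/ 3) ^ n / 2).
  { rewrite norm_minus_comm. eapply Rle_trans; [apply Hl|]. right. simpl. field. }
  assert (Htail : norm (L n (minus (u n) l)) <= nu n * ((/ 3) ^ n / 2)).
  { eapply Rle_trans; [apply (unit_image_lub_bound (L n) (nu n) (HL n) (Hnu n))|].
    apply Rmult_le_compat_l; [apply Rlt_le, Hnu0|exact Hdist]. }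
  assert (Hrev : norm (L n (u n)) - norm (L n l) <= norm (L n (minus (u n) l))).
  { rewrite (linear_minus (L n) _ _ (HL n)). apply norm_minus_ge. }
  assert (Hw : 6 * 3 ^ n * (INR n + 1) * (/ 3) ^ n / 6 = INR n + 1).
  { rewrite pow_inv. field. apply pow_nonzero. lra. }
  assert (6 * 3 ^ n * (INR n + 1) * (/ 3) ^ n < nu n * (/ 3) ^ n)
    by (apply Rmult_lt_compat_r; [apply Hp|apply Hbig]).
  pose proof (proj2 (Hy n)). pose proof (Hu n). lra.
Qed.

Lemma uniform_boundedness (L : nat -> X -> X) :
  (forall n, is_linear (L n)) ->
  (forall x, exists B N0, forall n, (N0 <= n)%nat -> norm (L n x) <= B) ->
  exists N0 K, forall n, (N0 <= n)%nat -> forall x, norm (L n x) <= K * norm x.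
Proof.
  intros HL Hpt. apply NNPP. intros Hn.
  assert (Hbad : forall j, exists p : nat * R, (j <= fst p)%nat /\
            is_lub (unit_image (L (fst p))) (snd p) /\ 6 * 3 ^ j * (INR j + 1) < snd p).
  { intros j. apply NNPP. intros Hno. apply Hn. exists j, (6 * 3 ^ j * (INR j + 1)).
    intros k Hk x. apply Rnot_lt_le. intros Hx. apply Hno.
    destruct (unit_image_lub_exists (L k) (HL k)) as [nu Hnu].
    exists (k, nu). simpl. split; [exact Hk|split; [exact Hnu|]].
    pose proof (unit_image_lub_bound (L k) nu (HL k) Hnu x) as Hb.
    destruct (Req_dec (norm x) 0) as [H0|H0].
    - apply norm_eq_zero in H0. subst x.
      rewrite (linear_zero (L k) (HL k)), norm_zero, Rmult_0_r in Hx. lra.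
    - pose proof (norm_ge_0 x). apply (Rmult_lt_reg_r (norm x)); lra. }
  destruct (functional_choice _ Hbad) as [p Hp].
  destruct (gliding_hump (fun j => L (fst (p j))) (fun j => snd (p j))) as [x Hx].
  { intros j. apply HL. }
  { intros j. apply Hp. }
  { intros j. apply Hp. }
  destruct (Hpt x) as [B [N0 HB]].
  destruct (INR_unbounded B) as [j Hj].
  set (m := Nat.max N0 j).
  specialize (Hx m). specialize (HB (fst (p m)) ltac:(destruct (Hp m); unfold m in *; lia)).
  assert (INR j <= INR m) by (apply le_INR; unfold m; lia). lra.
Qed.

End UniformBoundedness.

Lemma filterlim_at_right_norm_lt {X : CompleteNormedModule R_AbsRing} (f : R -> X) (l : X) :
  filterlim f (at_right 0) (locally l) ->
  forall eps, 0 < eps -> exists d, 0 < d /\ forall t, 0 < t < d -> norm (minus (f t) l) < eps.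
Proof.
  intros Hf eps He.
  set (nf := @norm_factor R_AbsRing X).
  assert (Hnf : 0 < nf) by apply norm_factor_gt_0.
  set (e := mkposreal (eps / nf) (Rdiv_lt_0_compat _ _ He Hnf)).
  destruct (proj1 (filterlim_locally _ _) Hf e) as [d Hd].
  exists d. split; [apply cond_pos|]. intros t [Ht0 Htd].
  assert (Hb : ball l e (f t)).
  { apply Hd; [|exact Ht0]. change (Rabs (t - 0) < d). rewrite Rabs_right; lra. }
  apply norm_lt_of_ball in Hb. simpl in Hb.
  replace eps with (nf * (eps / nf)) by (field; lra). exact Hb.
Qed.

Section Semigroup.
Context {X : CompleteNormedModule R_AbsRing} (S : R -> X -> X).
Hypothesis HS : C0_semigroup S.

Lemma semigroup_linear t : 0 <= t -> is_linear (S t).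
Proof.
  intros Ht. destruct HS as [Hplus [Hscal [Hbdd _]]].
  destruct (Hbdd t Ht) as [M HM].
  apply Build_is_linear; [exact (Hplus t Ht)|exact (Hscal t Ht)|].
  exists (Rabs M + 1). split; [pose proof (Rabs_pos M); lra|].
  intros x. eapply Rle_trans; [apply HM|]. apply Rmult_le_compat_r; [apply norm_ge_0|].
  pose proof (Rle_abs M). lra.
Qed.

Lemma semigroup_minus t x y : 0 <= t -> S t (minus x y) = minus (S t x) (S t y).
Proof. intros Ht. exact (linear_minus (S t) x y (semigroup_linear t Ht)). Qed.

Lemma semigroup_scal t a x : 0 <= t -> S t (scal a x) = scal a (S t x).
Proof. intros Ht. exact (linear_scal (S t) (semigroup_linear t Ht) a x). Qed.

Lemma semigroup_zero t : 0 <= t -> S t zero = zero.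
Proof. intros Ht. exact (linear_zero (S t) (semigroup_linear t Ht)). Qed.

Lemma semigroup_0 x : S 0 x = x.
Proof. apply HS. Qed.

Lemma semigroup_add s t x : 0 <= s -> 0 <= t -> S (s + t) x = S s (S t x).
Proof. apply HS. Qed.

Lemma semigroup_right_cont x eps : 0 < eps ->
  exists d, 0 < d /\ forall t, 0 <= t < d -> norm (minus (S t x) x) < eps.
Proof.
  intros He. destruct HS as [_ [_ [_ [_ [_ Hc]]]]].
  destruct (filterlim_at_right_norm_lt _ _ (Hc x) eps He) as [d [Hd Hdd]].
  exists d. split; [exact Hd|]. intros t Ht.
  destruct (Req_dec t 0) as [->|]; [rewrite semigroup_0, norm_minus_self; exact He|apply Hdd; lra].
Qed.

(* Otherwise there are [t_n <= 1 / (n + 1)] with [|S t_n| > n + 1], contradicting the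
   uniform boundedness principle since [S t_n x -> x] for every [x]. *)
Lemma semigroup_locally_bounded : exists d K, 0 < d /\
  forall t, 0 <= t <= d -> forall x, norm (S t x) <= K * norm x.
Proof.
  apply NNPP. intros Hn.
  assert (Hbad : forall n : nat, exists p : R * X, 0 <= fst p <= / (INR n + 1) /\
            (INR n + 1) * norm (snd p) < norm (S (fst p) (snd p))).
  { intros n. apply NNPP. intros Hno. apply Hn.
    exists (/ (INR n + 1)), (INR n + 1). pose proof (pos_INR n).
    split; [apply Rinv_0_lt_compat; lra|]. intros t Ht x.
    apply Rnot_lt_le. intros Hx. apply Hno. now exists (t, x). }
  destruct (functional_choice _ Hbad) as [p Hp].
  destruct (uniform_boundedness (fun n => S (fst (p n)))) as [N0 [K HK]].
  { intros n. apply semigroup_linear, (Hp n). }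
  { intros x. destruct (semigroup_right_cont x 1 ltac:(lra)) as [d [Hd Hdd]].
    destruct (INR_unbounded (/ d)) as [N0 HN0].
    exists (norm x + 1), N0. intros n Hn0.
    assert (Hsmall : fst (p n) < d).
    { destruct (Hp n) as [[_ Ht] _]. eapply Rle_lt_trans; [exact Ht|].
      assert (INR N0 <= INR n) by (apply le_INR; exact Hn0).
      rewrite <- (Rinv_inv d). apply Rinv_lt_contravar; [|lra].
      apply Rmult_lt_0_compat; [apply Rinv_0_lt_compat; lra|pose proof (pos_INR n); lra]. }
    pose proof (norm_minus_ge (S (fst (p n)) x) x).
    specialize (Hdd (fst (p n)) ltac:(split; [apply Hp|exact Hsmall])). lra. }
  destruct (INR_unbounded K) as [j Hj].
  set (n := Nat.max N0 j).
  assert (INR j <= INR n) by (apply le_INR; unfold n; lia).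
  specialize (HK n ltac:(unfold n; lia) (snd (p n))).
  destruct (Hp n) as [_ Hx]. pose proof (norm_ge_0 (snd (p n))). nra.
Qed.

Lemma semigroup_bounded_on T : exists M, 1 <= M /\
  forall t, 0 <= t <= T -> forall x, norm (S t x) <= M * norm x.
Proof.
  destruct semigroup_locally_bounded as [d [K [Hd HK]]].
  set (K' := Rmax K 1).
  assert (HK1 : 1 <= K') by apply Rmax_r.
  assert (HKK' : forall t, 0 <= t <= d -> forall x, norm (S t x) <= K' * norm x).
  { intros t Ht x. eapply Rle_trans; [apply HK, Ht|].
    apply Rmult_le_compat_r; [apply norm_ge_0|apply Rmax_l]. }
  assert (Hj : forall j : nat, forall t, 0 <= t <= INR j * d -> forall x,
            norm (S t x) <= K' ^ j * norm x).
  { induction j as [|j IH]; intros t Ht x.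
    - simpl in *. replace t with 0 by lra. rewrite semigroup_0. lra.
    - rewrite S_INR in Ht. simpl pow.
      destruct (Rle_dec t d) as [Htd|Htd].
      + eapply Rle_trans; [apply HKK'; lra|]. apply Rmult_le_compat_r; [apply norm_ge_0|].
        pose proof (pow_R1_Rle K' j HK1). nra.
      + replace t with (d + (t - d)) by ring. rewrite semigroup_add by lra.
        eapply Rle_trans; [apply HKK'; lra|].
        rewrite Rmult_assoc. apply Rmult_le_compat_l; [lra|]. apply IH. lra. }
  destruct (INR_unbounded (T / d)) as [j Hjd].
  exists (K' ^ j). split; [apply pow_R1_Rle; exact HK1|].
  assert (T <= INR j * d).
  { apply (Rmult_le_reg_r (/ d)); [apply Rinv_0_lt_compat; lra|].
    replace (INR j * d * / d) with (INR j) by (field; lra). unfold Rdiv in Hjd. lra. }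
  intros t Ht x. apply Hj. lra.
Qed.

Lemma semigroup_strong_cont w s0 : 0 <= s0 -> forall eps, 0 < eps -> exists delta, 0 < delta /\
  forall s, 0 <= s -> Rabs (s - s0) < delta -> norm (minus (S s w) (S s0 w)) < eps.
Proof.
  intros Hs0 eps He.
  destruct (semigroup_bounded_on s0) as [M [HM1 HM]].
  destruct (semigroup_right_cont w (eps / M) ltac:(apply Rdiv_lt_0_compat; lra)) as [d [Hd Hdd]].
  exists d. split; [exact Hd|]. intros s Hs Hsd.
  assert (Hjump : forall a b, 0 <= a <= s0 -> 0 <= b -> b < d ->
            norm (minus (S (a + b) w) (S a w)) < eps).
  { intros a b Ha Hb Hbd. rewrite semigroup_add, <- semigroup_minus by lra.
    eapply Rle_lt_trans; [apply HM; lra|].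
    apply Rlt_le_trans with (M * (eps / M)); [apply Rmult_lt_compat_l; [lra|apply Hdd; lra]|].
    right. field. lra. }
  destruct (Rle_dec s0 s).
  - replace s with (s0 + (s - s0)) by ring. apply Hjump; [lra|lra|].
    rewrite Rabs_right in Hsd; lra.
  - rewrite norm_minus_comm. replace s0 with (s + (s0 - s)) by ring. apply Hjump; [lra|lra|].
    rewrite Rabs_left in Hsd; lra.
Qed.

Lemma generator_lipschitz v w T M : generator S v w -> 0 <= M ->
  (forall t, 0 <= t <= T -> forall x, norm (S t x) <= M * norm x) ->
  forall s, 0 <= s <= T -> norm (minus (S s v) v) <= M * norm w * s.
Proof.
  intros Hg HM0 HM s Hs.
  rewrite <- (semigroup_0 v) at 2. replace (M * norm w * s) with (M * norm w * (s - 0)) by ring.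
  apply (mean_value_ineq (fun u => S u v) (fun u => S u w)); [lra| | |intros z Hz; apply HM; lra].
  - intros z Hz eps He. destruct (semigroup_strong_cont v z ltac:(lra) eps He) as [d [Hd Hdd]].
    exists d. split; [exact Hd|]. intros y Hy Hyz. apply Hdd; lra.
  - intros z Hz eps He.
    set (e := eps / (M + 1)).
    assert (He' : 0 < e) by (unfold e; apply Rdiv_lt_0_compat; lra).
    destruct (filterlim_at_right_norm_lt _ _ Hg e He') as [d [Hd Hdd]].
    exists d. split; [exact Hd|]. intros y Hy Hyd.
    set (q := minus (S (y - z) v) (plus v (scal (y - z) w))).
    assert (Hq : norm q <= (y - z) * e).
    { assert (Hqe : q = scal (y - z) (minus (scal (/ (y - z)) (minus (S (y - z) v) v)) w))
        by exact (minus_plus_scal_div _ _ _ _ (Rgt_not_eq (y - z) 0 ltac:(lra))).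
      rewrite Hqe, norm_scal_R, Rabs_right by lra.
      apply Rmult_le_compat_l; [lra|]. left. apply Hdd. lra. }
    replace (minus (S y v) (plus (S z v) (scal (y - z) (S z w)))) with (S z q).
    + eapply Rle_trans; [apply HM; lra|].
      apply Rle_trans with (M * ((y - z) * e)); [apply Rmult_le_compat_l; [lra|exact Hq]|].
      unfold e. apply Rle_trans with ((M + 1) * ((y - z) * (eps / (M + 1)))).
      * apply Rmult_le_compat_r; [|lra]. apply Rmult_le_pos; [lra|left; exact He'].
      * right. field. lra.
    + unfold q. rewrite semigroup_minus, <- semigroup_add by lra.
      replace (z + (y - z)) with y by ring. f_equal. transitivity (plus (S z v) (S z (scal (y - z) w))).
      * exact (linear_plus (S z) (semigroup_linear z ltac:(lra)) _ _).
      * now rewrite semigroup_scal by lra.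
Qed.

Lemma semigroup_minus_scal_split t a c v : 0 <= t ->
  minus (S t a) (scal c v) = plus (S t (minus a (scal c v))) (scal c (minus (S t v) v)).
Proof.
  intros Ht. symmetry.
  transitivity (plus (minus (S t a) (scal c (S t v))) (minus (scal c (S t v)) (scal c v))).
  - f_equal; [now rewrite semigroup_minus, semigroup_scal|exact (scal_minus_distr_l _ _ _)].
  - exact (plus_minus_chain _ _ _).
Qed.

Lemma cont_within_semigroup_conv (g : R -> X) t : 0 <= t -> cont_within g 0 t ->
  cont_within (fun s => S (t - s) (g s)) 0 t.
Proof.
  intros Ht Hg x Hx eps He.
  destruct (semigroup_bounded_on t) as [M [HM1 HM]].
  destruct (Hg x Hx (eps / (2 * M)) ltac:(apply Rdiv_lt_0_compat; lra)) as [d1 [Hd1 Hdd1]].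
  destruct (semigroup_strong_cont (g x) (t - x) ltac:(lra) (eps / 2) ltac:(lra)) as [d2 [Hd2 Hdd2]].
  exists (Rmin d1 d2). split; [apply Rmin_glb_lt; lra|]. intros y Hy Hyx.
  assert (H1 : Rabs (y - x) < d1) by (eapply Rlt_le_trans; [exact Hyx|apply Rmin_l]).
  assert (H2 : Rabs (t - y - (t - x)) < d2).
  { replace (t - y - (t - x)) with (- (y - x)) by ring. rewrite Rabs_Ropp.
    eapply Rlt_le_trans; [exact Hyx|apply Rmin_r]. }
  eapply Rle_lt_trans; [apply (norm_minus_triangle _ (S (t - y) (g x)))|].
  rewrite <- semigroup_minus by lra.
  assert (norm (S (t - y) (minus (g y) (g x))) <= M * (eps / (2 * M))).
  { eapply Rle_trans; [apply HM; lra|]. apply Rmult_le_compat_l; [lra|left; apply Hdd1; auto]. }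
  assert (M * (eps / (2 * M)) = eps / 2) by (field; lra).
  specialize (Hdd2 (t - y) ltac:(lra) H2). lra.
Qed.

Lemma ex_RInt_semigroup_conv (g : R -> X) t : 0 <= t -> cont_within g 0 t ->
  ex_RInt (fun s => S (t - s) (g s)) 0 t.
Proof. intros Ht Hg. apply ex_RInt_cont_within; [exact Ht|]. now apply cont_within_semigroup_conv. Qed.

End Semigroup.

Lemma cont_within_const {X : CompleteNormedModule R_AbsRing} (v : X) a b :
  cont_within (fun _ => v) a b.
Proof. intros x _ eps He. exists 1. split; [lra|]. intros. now rewrite norm_minus_self. Qed.

Lemma cont_within_lipschitz_rpow {X : CompleteNormedModule R_AbsRing} (h : R -> X) L r c t :
  0 < r <= 1 -> 0 <= c -> 0 <= L ->
  (forall x y, 0 <= x -> 0 <= y -> norm (minus (h y) (h x)) <= L * Rabs (y - x)) ->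
  cont_within (fun u => h (rpow (c + u) r)) 0 t.
Proof.
  intros Hr Hc HL Hh x Hx eps He.
  destruct (rpow_lt_near_0 r ltac:(lra) (eps / (L + 1)) ltac:(apply Rdiv_lt_0_compat; lra))
    as [d [Hd Hdd]].
  exists d. split; [exact Hd|]. intros y Hy Hyx.
  eapply Rle_lt_trans; [apply Hh; apply rpow_ge0|].
  eapply Rle_lt_trans; [apply Rmult_le_compat_l; [exact HL|apply rpow_dist_le; lra]|].
  replace (c + y - (c + x)) with (y - x) by ring.
  assert (Hs := Hdd (Rabs (y - x)) ltac:(split; [apply Rabs_pos|exact Hyx])).
  pose proof (rpow_ge0 (Rabs (y - x)) r).
  apply Rle_lt_trans with ((L + 1) * rpow (Rabs (y - x)) r); [nra|].
  apply (Rmult_lt_compat_l (L + 1)) in Hs; [|lra].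
  replace ((L + 1) * (eps / (L + 1))) with eps in Hs by (field; lra). exact Hs.
Qed.

Lemma Rmult_neg1_opp (z : R) : -1 * - z = z.
Proof. ring. Qed.

(* Pairing [u] with [tau - u] folds the integral onto [0, tau/2]. *)
Lemma RInt_symmetric_bound (phi : R -> R) tau m D : 0 < tau ->
  @cont_within R_CompleteNormedModule (fun u => phi u - m) 0 tau ->
  (forall u, 0 <= u <= tau / 2 -> 0 <= 2 * m - phi u - phi (tau - u) <= D) ->
  Rabs (RInt (fun u => phi u - m) 0 tau) <= tau / 2 * D.
Proof.
  intros Ht Hc Hb.
  set (f := fun u => phi u - m).
  assert (Hex : ex_RInt f 0 tau) by (apply (@ex_RInt_cont_within R_CompleteNormedModule); [lra|exact Hc]).
  assert (Hex1 : ex_RInt f 0 (tau / 2))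
    by (apply (@ex_RInt_Chasles_1 R_CompleteNormedModule f 0 (tau / 2) tau); [lra|exact Hex]).
  assert (Hex2 : ex_RInt f (tau / 2) tau)
    by (apply (@ex_RInt_Chasles_2 R_CompleteNormedModule f 0 (tau / 2) tau); [lra|exact Hex]).
  rewrite <- (@RInt_Chasles R_CompleteNormedModule f 0 (tau / 2) tau Hex1 Hex2).
  set (I1 := RInt f 0 (tau / 2)). set (I2 := RInt f (tau / 2) tau).
  assert (H1 : is_RInt f 0 (tau / 2) I1) by (apply (@RInt_correct R_CompleteNormedModule); exact Hex1).
  assert (H2 : is_RInt f (tau / 2) tau I2) by (apply (@RInt_correct R_CompleteNormedModule); exact Hex2).
  assert (H2' : is_RInt (fun u => f (tau - u)) 0 (tau / 2) I2).
  { apply is_RInt_swap in H2.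
    assert (H3 := is_RInt_comp_lin f (-1) tau 0 (tau / 2) (opp I2)).
    replace (-1 * 0 + tau) with tau in H3 by ring.
    replace (-1 * (tau / 2) + tau) with (tau / 2) in H3 by field.
    specialize (H3 H2). apply (is_RInt_scal _ _ _ (-1)) in H3.
    assert (H4 : is_RInt (fun y => scal (-1) (scal (-1) (f (-1 * y + tau)))) 0 (tau / 2) I2).
    { replace I2 with (scal (-1) (opp I2)); [exact H3|exact (Rmult_neg1_opp I2)]. }
    eapply is_RInt_ext; [|exact H4].
    intros x _. change (-1 * (-1 * f (-1 * x + tau)) = f (tau - x)).
    replace (-1 * x + tau) with (tau - x) by ring. ring. }
  assert (Hs : is_RInt (fun u => f u + f (tau - u)) 0 (tau / 2) (I1 + I2))
    by exact (is_RInt_plus _ _ _ _ _ _ H1 H2').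
  assert (HB : forall x, 0 <= x <= tau / 2 -> norm (f x + f (tau - x)) <= D).
  { intros x Hx. change (Rabs (f x + f (tau - x)) <= D). unfold f.
    specialize (Hb x Hx). rewrite Rabs_left1 by lra. lra. }
  pose proof (norm_RInt_le_const _ 0 (tau / 2) _ D ltac:(lra) HB Hs) as Hn.
  change (Rabs (I1 + I2) <= (tau / 2 - 0) * D) in Hn.
  change (plus I1 I2) with (I1 + I2). lra.
Qed.

Lemma rpow_midpoint_defect_bounds tk tau u r : 0 < r < 1 -> 0 <= tk -> 0 <= u <= tau / 2 ->
  0 <= 2 * rpow (tk + tau / 2) r - rpow (tk + u) r - rpow (tk + (tau - u)) r
    <= 2 * rpow (tk + tau / 2) r - rpow tk r - rpow (tk + tau) r.
Proof.
  intros Hr Htk Hu. split.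
  - pose proof (rpow_increment_antitone (tk + u) (tk + tau / 2) (tau / 2 - u) r Hr
                  ltac:(lra) ltac:(lra)) as H.
    replace (tk + tau / 2 + (tau / 2 - u)) with (tk + (tau - u)) in H by field.
    replace (tk + u + (tau / 2 - u)) with (tk + tau / 2) in H by field. lra.
  - pose proof (rpow_increment_antitone tk (tk + (tau - u)) u r Hr ltac:(lra) ltac:(lra)) as H.
    replace (tk + (tau - u) + u) with (tk + tau) in H by ring. lra.
Qed.

Lemma cont_within_rpow_shift_minus tk m r tau : 0 < r < 1 -> 0 <= tk ->
  @cont_within R_CompleteNormedModule (fun u => rpow (tk + u) r - m) 0 tau.
Proof.
  intros Hr Htk.
  assert (Hlip : forall x y : R, 0 <= x -> 0 <= y ->
            @norm R_AbsRing R_CompleteNormedModule (minus (y - m) (x - m)) <= 1 * Rabs (y - x)).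
  { intros x y _ _. change (Rabs ((y - m) - (x - m)) <= 1 * Rabs (y - x)).
    replace ((y - m) - (x - m)) with (y - x) by ring. lra. }
  exact (cont_within_lipschitz_rpow (fun x : R => x - m) 1 r tk tau ltac:(lra) Htk ltac:(lra) Hlip).
Qed.

Lemma ex_RInt_rpow_shift_minus tk m r tau : 0 < r < 1 -> 0 <= tk -> 0 <= tau ->
  ex_RInt (fun u => rpow (tk + u) r - m) 0 tau.
Proof.
  intros Hr Htk Htau. apply (@ex_RInt_cont_within R_CompleteNormedModule); [exact Htau|].
  now apply cont_within_rpow_shift_minus.
Qed.

Lemma RInt_rpow_minus_midpoint_bound tk tau r : 0 < r < 1 -> 0 <= tk -> 0 < tau ->
  Rabs (RInt (fun u => rpow (tk + u) r - rpow (tk + tau / 2) r) 0 tau)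
    <= tau / 2 * (2 * rpow (tk + tau / 2) r - rpow tk r - rpow (tk + tau) r).
Proof.
  intros Hr Htk Htau.
  apply (RInt_symmetric_bound (fun u => rpow (tk + u) r)); [exact Htau| |].
  - now apply cont_within_rpow_shift_minus.
  - intros u Hu. now apply rpow_midpoint_defect_bounds.
Qed.

Lemma Rabs_sub_le_interval a b lo hi : lo <= a <= hi -> lo <= b <= hi -> Rabs (a - b) <= hi - lo.
Proof. intros. unfold Rabs. destruct Rcase_abs; lra. Qed.

Definition local_error {X : CompleteNormedModule R_AbsRing} (S : R -> X -> X) (h : R -> X)
  (r tk tau : R) (v : X) : X :=
  minus (RInt (fun u => S (tau - u) (h (rpow (tk + u) r))) 0 tau) (tau_phi1 S tau v).

Section LocalError.
Context {X : CompleteNormedModule R_AbsRing} (S : R -> X -> X) (h : R -> X) (r L : R).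
Hypothesis HS : C0_semigroup S.
Hypothesis Hr : 0 < r < 1.
Hypothesis HL : 0 <= L.
Hypothesis Hh : forall x y, 0 <= x -> 0 <= y -> norm (minus (h y) (h x)) <= L * Rabs (y - x).

Lemma is_RInt_local_error tk tau m : 0 < tau -> 0 <= tk ->
  is_RInt (fun u => S (tau - u) (minus (h (rpow (tk + u) r)) (h m))) 0 tau
    (local_error S h r tk tau (h m)).
Proof.
  intros Htau Htk.
  assert (HexG : ex_RInt (fun u => S (tau - u) (h (rpow (tk + u) r))) 0 tau).
  { apply (ex_RInt_semigroup_conv S HS); [lra|].
    apply (cont_within_lipschitz_rpow h L); auto; lra. }
  assert (HexC : ex_RInt (fun u => S (tau - u) (h m)) 0 tau).
  { apply (ex_RInt_semigroup_conv S HS (fun _ => h m)); [lra|apply cont_within_const]. }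
  eapply is_RInt_ext; [|exact (is_RInt_minus _ _ _ _ _ _ (RInt_correct _ _ _ HexG) (RInt_correct _ _ _ HexC))].
  intros x Hx. rewrite Rmin_left, Rmax_right in Hx by lra.
  symmetry. apply (semigroup_minus S HS). lra.
Qed.

Lemma local_error_lipschitz_bound tk tau c1 M : 0 < tau -> 0 <= tk -> 0 <= c1 <= 1 -> 0 <= M ->
  (forall t, 0 <= t <= tau -> forall x, norm (S t x) <= M * norm x) ->
  norm (local_error S h r tk tau (h (rpow (tk + c1 * tau) r)))
    <= tau * (M * (L * (rpow (tk + tau) r - rpow tk r))).
Proof.
  intros Htau Htk Hc1 HM0 HM.
  assert (Hb : forall u, 0 <= u <= tau ->
    norm (S (tau - u) (minus (h (rpow (tk + u) r)) (h (rpow (tk + c1 * tau) r))))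
      <= M * (L * (rpow (tk + tau) r - rpow tk r))).
  { intros u Hu. eapply Rle_trans; [apply HM; lra|]. apply Rmult_le_compat_l; [exact HM0|].
    eapply Rle_trans; [apply Hh; apply rpow_ge0|]. apply Rmult_le_compat_l; [exact HL|].
    apply Rabs_sub_le_interval; split; apply rpow_le_compat; nra. }
  pose proof (norm_RInt_le_const _ 0 tau _ _ ltac:(lra) Hb (is_RInt_local_error tk tau _ Htau Htk))
    as Hn.
  now replace (tau - 0) with tau in Hn by ring.
Qed.

End LocalError.

Section MidpointError.
Context {X : CompleteNormedModule R_AbsRing} (S : R -> X -> X) (h h' h'' : R -> X) (r Mh KA : R).
Hypothesis HS : C0_semigroup S.
Hypothesis Hr : 0 < r < 1.
Hypothesis Hd1 : deriv_nonneg h h'.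
Hypothesis Hd2 : deriv_nonneg h' h''.
Hypothesis Hh' : forall x, 0 <= x -> norm (h' x) <= Mh.
Hypothesis Hh'' : forall x, 0 <= x -> norm (h'' x) <= Mh.
Hypothesis HA : forall x, 0 <= x -> exists v, generator S (h' x) v /\ norm v <= KA.

Lemma semigroup_increment_expansion tau M t x y : 0 <= M ->
  (forall s, 0 <= s <= tau -> forall z, norm (S s z) <= M * norm z) ->
  0 <= t <= tau -> 0 <= x -> 0 <= y ->
  norm (minus (S t (minus (h y) (h x))) (scal (y - x) (h' x)))
    <= M * (Mh * (y - x) ^ 2) + Rabs (y - x) * (M * KA * t).
Proof.
  intros HM0 HM Ht Hx Hy.
  destruct (HA x Hx) as [w [Hg Hw]].
  rewrite (semigroup_minus_scal_split S HS) by lra.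
  eapply Rle_trans; [exact (norm_triangle _ _)|]. apply Rplus_le_compat.
  - eapply Rle_trans; [apply HM; lra|]. apply Rmult_le_compat_l; [exact HM0|].
    apply (deriv_nonneg_taylor h h' h''); auto.
  - rewrite norm_scal_R. apply Rmult_le_compat_l; [apply Rabs_pos|].
    eapply Rle_trans; [apply (generator_lipschitz S HS _ _ tau M Hg HM0 HM); lra|].
    apply Rmult_le_compat_r; [lra|]. apply Rmult_le_compat_l; [exact HM0|exact Hw].
Qed.
Lemma local_error_integrand_bound tk tau M m u : 0 < tau -> 0 <= tk -> 0 <= M ->
  (forall t, 0 <= t <= tau -> forall x, norm (S t x) <= M * norm x) ->
  rpow tk r <= m <= rpow (tk + tau) r -> 0 <= u <= tau ->
  norm (minus (S (tau - u) (minus (h (rpow (tk + u) r)) (h m))) (scal (rpow (tk + u) r - m) (h' m)))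
    <= M * Mh * (rpow (tk + tau) r - rpow tk r) * rpow tau r
       + (rpow (tk + tau) r - rpow tk r) * M * KA * tau.
Proof.
  intros Htau Htk HM0 HM Hm Hu.
  set (Dl := rpow (tk + tau) r - rpow tk r). set (c := rpow (tk + u) r - m).
  assert (HMh0 : 0 <= Mh) by (pose proof (Hh' 0 ltac:(lra)); pose proof (norm_ge_0 (h' 0)); lra).
  assert (HKA0 : 0 <= KA).
  { destruct (HA 0 ltac:(lra)) as [w [_ Hw]]. pose proof (norm_ge_0 w). lra. }
  assert (HDl : Dl <= rpow tau r).
  { pose proof (rpow_sub_le tk (tk + tau) r ltac:(lra) ltac:(lra)).
    replace (tk + tau - tk) with tau in * by ring. unfold Dl. lra. }
  assert (Hc : Rabs c <= Dl).
  { unfold c, Dl. apply Rabs_sub_le_interval; [split; apply rpow_le_compat; lra|lra]. }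
  eapply Rle_trans; [apply (semigroup_increment_expansion tau); auto; try lra|].
  - pose proof (rpow_ge0 tk r). lra.
  - apply rpow_ge0.
  - fold c. pose proof (Rabs_pos c).
    assert (c ^ 2 <= Dl * rpow tau r).
    { rewrite <- Rsqr_pow2, Rsqr_abs. unfold Rsqr. apply Rmult_le_compat; lra. }
    assert (M * (Mh * c ^ 2) <= M * Mh * Dl * rpow tau r).
    { apply Rle_trans with (M * (Mh * (Dl * rpow tau r))); [|right; ring].
      apply Rmult_le_compat_l; [lra|]. apply Rmult_le_compat_l; lra. }
    assert (Rabs c * (M * KA * (tau - u)) <= Dl * M * KA * tau).
    { assert (0 <= M * KA) by (apply Rmult_le_pos; lra).
      apply Rle_trans with (Dl * (M * KA * tau)); [|right; ring].
      apply Rmult_le_compat; [exact (Rabs_pos c)|nra|exact Hc|]. apply Rmult_le_compat_l; lra. }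
    lra.
Qed.

(* Expanding [h] to first order around the midpoint value [m], the constant term is
   integrated exactly by [tau phi_1] and the linear term has a small integral by symmetry. *)
Lemma local_error_midpoint_bound tk tau M : 0 < tau -> 0 <= tk -> 0 <= M ->
  (forall t, 0 <= t <= tau -> forall x, norm (S t x) <= M * norm x) ->
  norm (local_error S h r tk tau (h (rpow (tk + 1 / 2 * tau) r)))
    <= tau / 2 * Mh * (2 * rpow (tk + tau / 2) r - rpow tk r - rpow (tk + tau) r)
       + tau * (M * Mh * (rpow (tk + tau) r - rpow tk r) * rpow tau r
                + (rpow (tk + tau) r - rpow tk r) * M * KA * tau).
Proof.
  intros Htau Htk HM0 HM.
  replace (tk + 1 / 2 * tau) with (tk + tau / 2) by field.
  set (m := rpow (tk + tau / 2) r). set (v := h' m).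
  set (I := RInt (fun u => rpow (tk + u) r - m) 0 tau).
  set (B := M * Mh * (rpow (tk + tau) r - rpow tk r) * rpow tau r
            + (rpow (tk + tau) r - rpow tk r) * M * KA * tau).
  assert (HMh0 : 0 <= Mh) by (pose proof (Hh' 0 ltac:(lra)); pose proof (norm_ge_0 (h' 0)); lra).
  assert (Hm : rpow tk r <= m <= rpow (tk + tau) r) by (split; apply rpow_le_compat; lra).
  assert (HI : is_RInt (fun u => scal (rpow (tk + u) r - m) v) 0 tau (scal I v))
    by exact (is_RInt_linear (fun k : R => scal k v) _ _ _ _ (is_linear_scal_l v)
                (RInt_correct _ _ _ (ex_RInt_rpow_shift_minus tk m r tau Hr Htk ltac:(lra)))).
  assert (Hn : norm (minus (local_error S h r tk tau (h m)) (scal I v)) <= tau * B).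
  { pose proof (norm_RInt_le_const _ 0 tau _ B ltac:(lra)
      (fun u Hu => local_error_integrand_bound tk tau M m u Htau Htk HM0 HM Hm Hu)
      (is_RInt_minus _ _ _ _ _ _ (is_RInt_local_error S h r Mh HS Hr HMh0
          (deriv_nonneg_lipschitz h h' Hd1 Mh Hh') tk tau m Htau Htk) HI)) as Hn.
    replace (tau - 0) with tau in Hn by ring. exact Hn. }
  assert (Hsc : norm (scal I v) <= tau / 2 * (2 * m - rpow tk r - rpow (tk + tau) r) * Mh).
  { rewrite norm_scal_R. apply Rmult_le_compat; [apply Rabs_pos|apply norm_ge_0| |].
    - apply RInt_rpow_minus_midpoint_bound; lra.
    - apply Hh', rpow_ge0. }
  pose proof (norm_minus_ge (local_error S h r tk tau (h m)) (scal I v)).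
  unfold B in *. lra.
Qed.

End MidpointError.

Fixpoint sum_lt (b : nat -> R) (n : nat) : R :=
  match n with O => 0 | Datatypes.S m => sum_lt b m + b m end.

Lemma sum_lt_plus (f g : nat -> R) n : sum_lt (fun k => f k + g k) n = sum_lt f n + sum_lt g n.
Proof. induction n as [|n IH]; simpl; [ring|rewrite IH; ring]. Qed.

Lemma sum_lt_scal (c : R) (f : nat -> R) n : sum_lt (fun k => c * f k) n = c * sum_lt f n.
Proof. induction n as [|n IH]; simpl; [ring|rewrite IH; ring]. Qed.

Lemma sum_lt_rpow_increments r tau n :
  sum_lt (fun k => rpow (INR k * tau + tau) r - rpow (INR k * tau) r) n = rpow (INR n * tau) r.
Proof.
  induction n as [|n IH]; simpl sum_lt.
  - simpl. rewrite Rmult_0_l, rpow_0. reflexivity.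
  - rewrite IH, S_INR. replace ((INR n + 1) * tau) with (INR n * tau + tau) by ring. ring.
Qed.

(* By concavity the second differences telescope, up to a term of the right sign. *)
Lemma sum_lt_rpow_midpoint_defects r tau n : 0 < r < 1 -> 0 < tau ->
  sum_lt (fun k => 2 * rpow (INR k * tau + tau / 2) r - rpow (INR k * tau) r
                   - rpow (INR k * tau + tau) r) n <= rpow (tau / 2) r.
Proof.
  intros Hr Htau.
  assert (Hinv : forall m, sum_lt (fun k => 2 * rpow (INR k * tau + tau / 2) r - rpow (INR k * tau) r
                   - rpow (INR k * tau + tau) r) m
            <= rpow (tau / 2) r - (rpow (INR m * tau + tau / 2) r - rpow (INR m * tau) r)).
  { induction m as [|m IH]; simpl sum_lt.
    - simpl. rewrite Rmult_0_l, Rplus_0_l, rpow_0. lra.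
    - rewrite S_INR. replace ((INR m + 1) * tau) with (INR m * tau + tau) by ring.
      set (tk := INR m * tau). assert (0 <= tk) by (unfold tk; pose proof (pos_INR m); nra).
      pose proof (rpow_increment_antitone (tk + tau / 2) (tk + tau) (tau / 2) r Hr
                    ltac:(lra) ltac:(lra)) as Hdec.
      replace (tk + tau / 2 + tau / 2) with (tk + tau) in Hdec by field.
      fold tk in IH. lra. }
  eapply Rle_trans; [apply Hinv|].
  pose proof (rpow_le_compat (INR n * tau) (INR n * tau + tau / 2) r ltac:(lra)
                ltac:(pose proof (pos_INR n); split; nra)). lra.
Qed.

Section DiscreteDuhamel.
Context {X : CompleteNormedModule R_AbsRing} (S : R -> X -> X).
Hypothesis HS : C0_semigroup S.

(* [e n = sum_(k < n) S ((n - 1 - k) tau) (d k)]; the induction propagates the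
   extra semigroup factor [S (j tau)]. *)
Lemma discrete_duhamel_bound tau M n (e d : nat -> X) (b : nat -> R) : 0 < tau -> 0 <= M ->
  (forall t, 0 <= t <= INR n * tau -> forall x, norm (S t x) <= M * norm x) ->
  e O = zero -> (forall k, (k < n)%nat -> e (Datatypes.S k) = plus (S tau (e k)) (d k)) ->
  (forall k, (k < n)%nat -> norm (d k) <= b k) ->
  norm (e n) <= M * sum_lt b n.
Proof.
  intros Htau HM0 HM He0 Hrec Hd.
  assert (Hgen : forall m j, (j + m <= n)%nat -> norm (S (INR j * tau) (e m)) <= M * sum_lt b m).
  { induction m as [|m IH]; intros j Hj; pose proof (pos_INR j).
    - rewrite He0, (semigroup_zero S HS) by nra. simpl sum_lt.
      eapply Rle_trans; [right; exact norm_zero|]. lra.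
    - rewrite Hrec by lia.
      rewrite (linear_plus (S (INR j * tau)) (semigroup_linear S HS (INR j * tau) ltac:(nra))).
      rewrite <- (semigroup_add S HS) by nra.
      replace (INR j * tau + tau) with (INR (Datatypes.S j) * tau) by (rewrite S_INR; ring).
      eapply Rle_trans; [exact (norm_triangle _ _)|].
      assert (H1 := IH (Datatypes.S j) ltac:(lia)).
      assert (H2 : norm (S (INR j * tau) (d m)) <= M * b m).
      { eapply Rle_trans; [apply HM|apply Rmult_le_compat_l; [exact HM0|apply Hd; lia]].
        split; [nra|]. apply Rmult_le_compat_r; [lra|]. apply le_INR. lia. }
      simpl sum_lt. lra. }
  specialize (Hgen n O ltac:(lia)). simpl INR in Hgen.
  now rewrite Rmult_0_l, (semigroup_0 S HS) in Hgen.
Qed.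

End DiscreteDuhamel.

Section GlobalError.
Context {X : CompleteNormedModule R_AbsRing} (S : R -> X -> X) (h : R -> X) (r L : R).
Hypothesis HS : C0_semigroup S.
Hypothesis Hr : 0 < r < 1.
Hypothesis HL : 0 <= L.
Hypothesis Hh : forall x y, 0 <= x -> 0 <= y -> norm (minus (h y) (h x)) <= L * Rabs (y - x).

Lemma cont_within_h_rpow t : cont_within (fun s => h (rpow s r)) 0 t.
Proof.
  intros x Hx eps He.
  destruct (cont_within_lipschitz_rpow h L r 0 t ltac:(lra) ltac:(lra) HL Hh x Hx eps He)
    as [d [Hd Hdd]].
  exists d. split; [exact Hd|]. intros y Hy Hyx.
  specialize (Hdd y Hy Hyx). now rewrite !Rplus_0_l in Hdd.
Qed.

Lemma mild_sol_step y0 tk tau : 0 <= tk -> 0 <= tau ->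
  mild_sol S h r y0 (tau + tk) =
  plus (S tau (mild_sol S h r y0 tk)) (RInt (fun u => S (tau - u) (h (rpow (tk + u) r))) 0 tau).
Proof.
  intros Htk Htau.
  set (F := fun t s => S (t - s) (h (rpow s r))).
  set (G := fun u => S (tau - u) (h (rpow (tk + u) r))).
  assert (HexF : ex_RInt (F tk) 0 tk)
    by (apply (ex_RInt_semigroup_conv S HS); [exact Htk|apply cont_within_h_rpow]).
  assert (HexG : ex_RInt G 0 tau).
  { apply (ex_RInt_semigroup_conv S HS); [exact Htau|].
    apply (cont_within_lipschitz_rpow h L); auto; lra. }
  assert (HA : is_RInt (F (tau + tk)) 0 tk (S tau (RInt (F tk) 0 tk))).
  { eapply is_RInt_ext;
      [|exact (is_RInt_linear (S tau) _ _ _ _ (semigroup_linear S HS tau Htau) (RInt_correct _ _ _ HexF))].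
    intros x Hx. rewrite Rmin_left, Rmax_right in Hx by lra. unfold F.
    rewrite <- semigroup_add by (auto; lra). f_equal. ring. }
  assert (HB : is_RInt (F (tau + tk)) tk (tau + tk) (RInt G 0 tau)).
  { assert (H := is_RInt_shift G 0 tau tk _ (RInt_correct _ _ _ HexG)).
    rewrite Rplus_0_l in H. eapply is_RInt_ext; [|exact H].
    intros x Hx. unfold G, F. f_equal; [ring|]. f_equal. f_equal. ring. }
  unfold mild_sol at 1. rewrite semigroup_add by auto.
  change (RInt (fun s => S (tau + tk - s) (h (rpow s r))) 0 (tau + tk))
    with (RInt (F (tau + tk)) 0 (tau + tk)).
  rewrite (is_RInt_unique _ _ _ _ (is_RInt_Chasles _ _ _ _ _ _ HA HB)).
  unfold mild_sol. rewrite (linear_plus (S tau) (semigroup_linear S HS tau Htau)).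
  exact (plus_assoc _ _ _).
Qed.

Lemma EQRF1_error_step y0 tau c1 k : 0 < tau ->
  minus (mild_sol S h r y0 (INR (Datatypes.S k) * tau)) (EQRF1 S h r y0 tau c1 (Datatypes.S k)) =
  plus (S tau (minus (mild_sol S h r y0 (INR k * tau)) (EQRF1 S h r y0 tau c1 k)))
       (local_error S h r (INR k * tau) tau (h (rpow (INR k * tau + c1 * tau) r))).
Proof.
  intros Htau.
  assert (Htk : 0 <= INR k * tau) by (pose proof (pos_INR k); nra).
  replace (INR (Datatypes.S k) * tau) with (tau + INR k * tau) by (rewrite S_INR; ring).
  rewrite mild_sol_step by lra. simpl EQRF1.
  rewrite (semigroup_minus S HS) by lra. exact (minus_plus_plus _ _ _ _).
Qed.

Lemma EQRF1_error_0 y0 tau c1 :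
  minus (mild_sol S h r y0 (INR 0 * tau)) (EQRF1 S h r y0 tau c1 0) = zero.
Proof.
  replace (INR 0 * tau) with 0 by (simpl; ring). unfold mild_sol. simpl EQRF1.
  rewrite (semigroup_0 S HS), RInt_point, plus_zero_r. exact (minus_eq_zero _).
Qed.

Lemma EQRF1_error_le_sum y0 tau c1 M n (b : nat -> R) : 0 < tau -> 0 <= M ->
  (forall t, 0 <= t <= INR n * tau -> forall x, norm (S t x) <= M * norm x) ->
  (forall k, (k < n)%nat ->
     norm (local_error S h r (INR k * tau) tau (h (rpow (INR k * tau + c1 * tau) r))) <= b k) ->
  norm (minus (mild_sol S h r y0 (INR n * tau)) (EQRF1 S h r y0 tau c1 n)) <= M * sum_lt b n.
Proof.
  intros Htau HM0 HM Hb.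
  apply (discrete_duhamel_bound S HS tau M n
           (fun k => minus (mild_sol S h r y0 (INR k * tau)) (EQRF1 S h r y0 tau c1 k))
           (fun k => local_error S h r (INR k * tau) tau (h (rpow (INR k * tau + c1 * tau) r))));
    auto.
  - apply EQRF1_error_0.
  - intros k _. now apply EQRF1_error_step.
Qed.

Lemma EQRF1_error_first_order y0 tau c1 M T n : 0 < tau -> 0 <= c1 <= 1 -> 0 <= M ->
  INR n * tau <= T -> (forall t, 0 <= t <= T -> forall x, norm (S t x) <= M * norm x) ->
  norm (minus (mild_sol S h r y0 (INR n * tau)) (EQRF1 S h r y0 tau c1 n))
    <= M * (M * (L * rpow T r)) * tau.
Proof.
  intros Htau Hc1 HM0 HnT HM.
  assert (Hloc : forall k, (k < n)%nat ->
     norm (local_error S h r (INR k * tau) tau (h (rpow (INR k * tau + c1 * tau) r)))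
       <= (tau * M * L) * (rpow (INR k * tau + tau) r - rpow (INR k * tau) r)).
  { intros k Hk.
    assert (tau <= T).
    { assert (1 <= INR n) by (apply (le_INR 1); lia). nra. }
    apply Rle_trans with (tau * (M * (L * (rpow (INR k * tau + tau) r - rpow (INR k * tau) r))));
      [|right; ring].
    apply (local_error_lipschitz_bound S h r L HS Hr HL Hh); auto.
    - pose proof (pos_INR k). nra.
    - intros t Ht. apply HM. lra. }
  eapply Rle_trans; [apply (EQRF1_error_le_sum y0 tau c1 M n _ Htau HM0 ltac:(intros t Ht; apply HM; lra) Hloc)|].
  rewrite sum_lt_scal, sum_lt_rpow_increments.
  assert (rpow (INR n * tau) r <= rpow T r)
    by (apply rpow_le_compat; [lra|pose proof (pos_INR n); split; nra]).
  assert (0 <= M * L) by (apply Rmult_le_pos; lra).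
  assert (0 <= M * L * tau * (rpow T r - rpow (INR n * tau) r))
    by (apply Rmult_le_pos; [apply Rmult_le_pos|]; lra).
  nra.
Qed.

End GlobalError.

Lemma EQRF1_error_midpoint_order {X : CompleteNormedModule R_AbsRing} (S : R -> X -> X)
  (h h' h'' : R -> X) (r Mh KA : R) y0 tau M T n :
  C0_semigroup S -> 0 < r < 1 -> deriv_nonneg h h' -> deriv_nonneg h' h'' ->
  (forall x, 0 <= x -> norm (h' x) <= Mh) -> (forall x, 0 <= x -> norm (h'' x) <= Mh) ->
  (forall x, 0 <= x -> exists v, generator S (h' x) v /\ norm v <= KA) ->
  0 < tau <= T -> INR n * tau <= T -> 0 <= M ->
  (forall t, 0 <= t <= T -> forall x, norm (S t x) <= M * norm x) ->
  norm (minus (mild_sol S h r y0 (INR n * tau)) (EQRF1 S h r y0 tau (1 / 2) n))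
    <= M * (Mh / 2 + M * Mh * rpow T r + M * KA * rpow T r * Rpower T (1 - r))
       * Rpower tau (1 + r).
Proof.
  intros HS Hr Hd1 Hd2 Hh' Hh'' HA Htau HnT HM0 HM.
  assert (HMh0 : 0 <= Mh) by (pose proof (Hh' 0 ltac:(lra)); pose proof (norm_ge_0 (h' 0)); lra).
  assert (HKA0 : 0 <= KA).
  { destruct (HA 0 ltac:(lra)) as [w [_ Hw]]. pose proof (norm_ge_0 w). lra. }
  set (rt := rpow tau r). set (rT := rpow T r).
  set (al := tau / 2 * Mh). set (be := tau * (M * Mh * rt + M * KA * tau)).
  set (A := fun k => 2 * rpow (INR k * tau + tau / 2) r - rpow (INR k * tau) r
                     - rpow (INR k * tau + tau) r).
  set (D := fun k => rpow (INR k * tau + tau) r - rpow (INR k * tau) r).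
  assert (Hloc : forall k, (k < n)%nat ->
     norm (local_error S h r (INR k * tau) tau (h (rpow (INR k * tau + 1 / 2 * tau) r)))
       <= al * A k + be * D k).
  { intros k _. eapply Rle_trans.
    - apply (local_error_midpoint_bound S h h' h'' r Mh KA HS Hr Hd1 Hd2 Hh' Hh'' HA
               (INR k * tau) tau M); [lra|pose proof (pos_INR k); nra|exact HM0|].
      intros t Ht. apply HM. lra.
    - right. unfold al, be, A, D, rt. ring. }
  eapply Rle_trans;
    [apply (EQRF1_error_le_sum S h r Mh HS Hr HMh0 (deriv_nonneg_lipschitz h h' Hd1 Mh Hh') y0 tau (1 / 2)
              M n _ ltac:(lra) HM0 ltac:(intros t Ht; apply HM; lra) Hloc)|].
  rewrite sum_lt_plus, sum_lt_scal, sum_lt_scal.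
  assert (HA_sum : sum_lt A n <= rt).
  { eapply Rle_trans; [apply sum_lt_rpow_midpoint_defects; lra|].
    apply rpow_le_compat; lra. }
  assert (HD_sum : sum_lt D n <= rT).
  { unfold D. rewrite sum_lt_rpow_increments. apply rpow_le_compat; [lra|].
    pose proof (pos_INR n). split; nra. }
  assert (Htau_le := le_rpow_mul_Rpower tau T r ltac:(lra) ltac:(lra)).
  assert (Hrt : 0 <= rt) by apply rpow_ge0. assert (HrT : 0 <= rT) by apply rpow_ge0.
  assert (Hbe : 0 <= be).
  { unfold be. apply Rmult_le_pos; [lra|].
    apply Rplus_le_le_0_compat; repeat apply Rmult_le_pos; lra. }
  assert (Hsum : al * sum_lt A n + be * sum_lt D n
                 <= (Mh / 2 + M * Mh * rT + M * KA * rT * Rpower T (1 - r)) * (tau * rt)).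
  { assert (al * sum_lt A n <= al * rt) by (apply Rmult_le_compat_l; [unfold al|]; nra).
    assert (be * sum_lt D n <= be * rT) by (apply Rmult_le_compat_l; lra).
    assert (M * KA * tau * rT <= M * KA * (rt * Rpower T (1 - r)) * rT).
    { apply Rmult_le_compat_r; [exact HrT|]. apply Rmult_le_compat_l; [|exact Htau_le].
      apply Rmult_le_pos; lra. }
    unfold al, be in *. nra. }
  rewrite Rpower_1_plus, Rmult_assoc by lra. apply Rmult_le_compat_l; [exact HM0|exact Hsum].
Qed.

Lemma uniform_grid T N n : 0 < T -> (0 < N)%nat -> (n <= N)%nat ->
  0 < T / INR N <= T /\ INR n * (T / INR N) <= T.
Proof.
  intros HT HN Hn.
  assert (HN1 : 1 <= INR N) by (apply (le_INR 1); lia).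
  assert (Hnn : INR n <= INR N) by (apply le_INR; lia).
  assert (Htau : 0 < T / INR N) by (apply Rdiv_lt_0_compat; lra).
  assert (HNtau : INR N * (T / INR N) = T) by (field; lra).
  split; [split; [exact Htau|]|]; nra.
Qed.

Theorem theorem1 (X : CompleteNormedModule R_AbsRing) (S : R -> X -> X)
  (T r c1 : R) (h : R -> X) :
  C0_semigroup S -> 0 < T -> 0 < r < 1 -> 0 <= c1 <= 1 ->
  ( (exists h' : R -> X, deriv_nonneg h h' /\
        exists M, forall x, 0 <= x -> norm (h' x) <= M) ->
    exists C : R, forall (y0 : X) (N : nat), (0 < N)%nat ->
      forall n : nat, (n <= N)%nat ->
        norm (minus (mild_sol S h r y0 (INR n * (T / INR N)))
                    (EQRF1 S h r y0 (T / INR N) c1 n))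
          <= C * (T / INR N) )
  /\
  ( (exists h' h'' : R -> X,
        deriv_nonneg h h' /\ deriv_nonneg h' h'' /\
        (exists M, forall x, 0 <= x -> norm (h' x) <= M /\ norm (h'' x) <= M) /\
        (exists M, forall x, 0 <= x ->
            exists v, generator S (h' x) v /\ norm v <= M)) ->
    c1 = 1 / 2 ->
    exists C : R, forall (y0 : X) (N : nat), (0 < N)%nat ->
      forall n : nat, (n <= N)%nat ->
        norm (minus (mild_sol S h r y0 (INR n * (T / INR N)))
                    (EQRF1 S h r y0 (T / INR N) c1 n))
          <= C * Rpower (T / INR N) (1 + r) ).
Proof.
  intros HS HT Hr Hc1.
  destruct (semigroup_bounded_on S HS T) as [M [HM1 HM]].
  split.
  - intros [h' [Hd [L HL]]].
    assert (HL0 : 0 <= L) by (pose proof (HL 0 ltac:(lra)); pose proof (norm_ge_0 (h' 0)); lra).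
    exists (M * (M * (L * rpow T r))). intros y0 N HN n Hn.
    destruct (uniform_grid T N n HT HN Hn) as [Htau HnT].
    apply (EQRF1_error_first_order S h r L HS Hr HL0 (deriv_nonneg_lipschitz h h' Hd L HL));
      auto; lra.
  - intros [h' [h'' [Hd1 [Hd2 [[Mh HMh] [KA HKA]]]]]] ->.
    exists (M * (Mh / 2 + M * Mh * rpow T r + M * KA * rpow T r * Rpower T (1 - r))).
    intros y0 N HN n Hn.
    destruct (uniform_grid T N n HT HN Hn) as [Htau HnT].
    apply (EQRF1_error_midpoint_order S h h' h'' r Mh KA); auto; try lra;
      intros x Hx; apply (HMh x Hx).
Qed.
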